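(* Let $\alpha>0$, $m>-1$, $\alpha>m$, $0<\lambda<\frac{2(\alpha-m)}{1+m}$. There is $n_1>0$ such that for every $n\in(0,n_1)$ the following holds. Let $\chi(\eta)=(p,q,r,s)(\eta)$ be a heteroclinic orbit of (S) from $M_0$ to $M_1$ with $e^{-2\eta}(\chi(\eta)-M_0)\to\kappa X_{01}$, $\kappa>0$, as $\eta\to-\infty$. Let $\Gamma_0>0$ and $U_0=a\Gamma_0$ (equivalently $\lambda=\big(\frac{U_0}{\Gamma_0}-\frac{2(1+\alpha)-n}{D}\big)\frac{D}{2(1+\alpha)}$), and set $\Theta_0=c^{-\frac1{1+\alpha}}\Gamma_0^{\frac m{1+\alpha}}U_0^{\frac{1+n}{1+\alpha}}$, $\Sigma_0=c^{\frac\alpha{1+\alpha}}\Gamma_0^{\frac m{1+\alpha}}U_0^{-\frac{\alpha-n}{1+\alpha}}$. Then there is $\eta_0\in\mathbb R$ such that, writing $(p,q,r,s)$ for the components of $\chi(\cdot-\eta_0)$ evaluated at $\eta=\log\xi$, the functions defined for $\xi>0$ by $$\Gamma=\xi^{-a_1}p^{\frac{1+\alpha}D}r^{\frac nD}s^{\frac\alpha D},\ V=\tfrac1b\xi^{-b_1}p^{-\frac{\alpha-m-n}D}q\,r^{\frac nD}s^{\frac\alpha D},\ \Theta=\xi^{-c_1}p^{\frac{1+m+n}D}r^{\frac{2n}D}s^{-\frac{1-m-n}D},$$ $$\Sigma=\xi^{-d_1}p^{-\frac{\alpha-m-n}D}r^{\frac nD}s^{\frac\alpha D},\ U=\xi^{-a_1}p^{\frac{1+\alpha}D}r^{1+\frac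 nD}s^{\frac\alpha D}$$ solve $V'=U$, $\Sigma'=bV+\lambda\xi U$, $c\Theta+\lambda\xi\Theta'=\Sigma U$, $a\Gamma+\lambda\xi\Gamma'=U$, $\Sigma=\Theta^{-\alpha}\Gamma^mU^n$ on $(0,\infty)$ and satisfy: (i) they extend to $\xi=0$ with $V(0)=\Gamma'(0)=\Theta'(0)=\Sigma'(0)=U'(0)=0$, $\Gamma(0)=\Gamma_0$, $U(0)=U_0$, $\Theta(0)=\Theta_0$, $\Sigma(0)=\Sigma_0$; (ii) as $\xi\to0$: $\Gamma-\Gamma_0=\Gamma''(0)\frac{\xi^2}2+o(\xi^2)$ with $\Gamma''(0)<0$; $\Theta-\Theta_0=\Theta''(0)\frac{\xi^2}2+o(\xi^2)$ with $\Theta''(0)<0$; $\Sigma-\Sigma_0=\Sigma''(0)\frac{\xi^2}2+o(\xi^2)$ with $\Sigma''(0)=(b+\lambda)U_0>0$; $U-U_0=U''(0)\frac{\xi^2}2+o(\xi^2)$ with $U''(0)<0$; $V-U_0\xi=U''(0)\frac{\xi^3}6+o(\xi^3)$; (iii) as $\xi\to\infty$: if $\frac{1+m+n}{\alpha-m-n}\ne1$, or $\frac{1+m+n}{\alpha-m-n}=1$ and $b=\lambda$, then $\Gamma,U=O(\xi^{-\frac{1+\alpha}{\alpha-m-n}})$, $V=O(1)$, $\Theta=O(\xi^{-\frac{1+m+n}{\alpha-m-n}})$, $\Sigma=O(\xi)$; otherwise $\Gamma,U=O(\xi^{-\frac{1+\alpha}{\alpha-m-n}}(\log\xi)^{\frac{1+\alpha}D})$,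 $V=O((\log\xi)^{-\frac{\alpha-m-n}D})$, $\Theta=O(\xi^{-\frac{1+m+n}{\alpha-m-n}}(\log\xi)^{\frac{1+m+n}D})$, $\Sigma=O(\xi(\log\xi)^{-\frac{\alpha-m-n}D})$.
   Context: $D=1+2\alpha-m-n$, $a=\frac{2+2\alpha-n}{D}+\frac{2(1+\alpha)}{D}\lambda$, $b=\frac{1+m}{D}+\frac{1+m+n}{D}\lambda$, $c=\frac{2(1+m)}{D}+\frac{2(1+m+n)}{D}\lambda$; $a_1=\frac{2(1+\alpha)}D$, $b_1=\frac{1+m+n}D$, $c_1=\frac{2(1+m+n)}D$, $d_1=\frac{2(-\alpha+m+n)}D$. System (S): $\dot p=p(\frac1\lambda(r-a)+2-\lambda pr-q)$, $\dot q=q(1-\lambda pr-q)+bpr$, $n\dot r=r(\frac{\alpha-m-n}{\lambda(1+\alpha)}(r-a)+\lambda pr+q+\frac\alpha\lambda r(s-\frac{1+m+n}{1+\alpha})+\frac{n\alpha}{\lambda(1+\alpha)})$, $\dot s=s(\frac{\alpha-m-n}{\lambda(1+\alpha)}(r-a)+\lambda pr+q-\frac1\lambda r(s-\frac{1+m+n}{1+\alpha})-\frac{n}{\lambda(1+\alpha)})$. $M_0=(0,0,r_0,s_0)$, $r_0=a$, $s_0=\frac{1+m+n}{1+\alpha}-\frac{n}{(1+\alpha)r_0}$; $M_1=(0,1,r_1,s_1)$, $r_1=a-\frac{1+\alpha}{\alpha-m-n}\lambda$, $s_1=\frac{1+m+n}{1+\alpha}-\frac{n}{(1+\alpha)r_1}$.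 $X_{01}=(1,br_0,y_1,z_1)^T$ with $y_1=-(\lambda+b)r_0\frac{\frac{1+\alpha}\lambda r_0+\frac2{s_0}}{\Delta_1}$, $z_1=-(\lambda+b)r_0\frac{\frac n{r_0}(\frac1\lambda+2)}{\Delta_1}$, $\Delta_1=\frac{1-s_0}\lambda(\frac{1+\alpha}\lambda r_0+\frac2{s_0})-\frac n{r_0}(\frac1\lambda+2)(\frac{r_0}\lambda+\frac2{s_0})$; it is the eigenvector of the Jacobian of (S) at $M_0$ for eigenvalue 2. $O(\cdot)$ refers to $\xi\to\infty$. *)

From Stdlib Require Import Reals.
Open Scope R_scope.

Definition Dd (al m n : R) : R := 1 + 2*al - m - n.
Definition aa (al m n lam : R) : R :=
  (2 + 2*al - n) / Dd al m n + 2*(1+al) / Dd al m n * lam.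
Definition bb (al m n lam : R) : R :=
  (1+m) / Dd al m n + (1+m+n) / Dd al m n * lam.
Definition cc (al m n lam : R) : R :=
  2*(1+m) / Dd al m n + 2*(1+m+n) / Dd al m n * lam.
Definition a1 (al m n : R) : R := 2*(1+al) / Dd al m n.
Definition b1 (al m n : R) : R := (1+m+n) / Dd al m n.
Definition c1 (al m n : R) : R := 2*(1+m+n) / Dd al m n.
Definition d1 (al m n : R) : R := 2*(-al+m+n) / Dd al m n.

Definition Fp (al m n lam p q r s : R) : R :=
  p * (1/lam * (r - aa al m n lam) + 2 - lam*p*r - q).
Definition Fq (al m n lam p q r s : R) : R :=
  q * (1 - lam*p*r - q) + bb al m n lam * p * r.
(* right-hand side of  n r' = ... *)
Definition Fr_rhs (al m n lam p q r s : R) : R :=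
  r * ((al-m-n)/(lam*(1+al)) * (r - aa al m n lam) + lam*p*r + q
       + al/lam * r * (s - (1+m+n)/(1+al)) + n*al/(lam*(1+al))).
Definition Fs (al m n lam p q r s : R) : R :=
  s * ((al-m-n)/(lam*(1+al)) * (r - aa al m n lam) + lam*p*r + q
       - 1/lam * r * (s - (1+m+n)/(1+al)) - n/(lam*(1+al))).

(* ---------- equilibria M0 = (0,0,r0,s0), M1 = (0,1,r1,s1) ---------- *)
Definition r0 (al m n lam : R) : R := aa al m n lam.
Definition s0 (al m n lam : R) : R :=
  (1+m+n)/(1+al) - n/((1+al) * r0 al m n lam).
Definition r1 (al m n lam : R) : R :=
  aa al m n lam - (1+al)/(al-m-n) * lam.
Definition s1 (al m n lam : R) : R :=
  (1+m+n)/(1+al) - n/((1+al) * r1 al m n lam).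

(* ---------- eigenvector X01 = (1, b r0, y1, z1) ---------- *)
Definition Delta1 (al m n lam : R) : R :=
  let r := r0 al m n lam in let s := s0 al m n lam in
  (1 - s)/lam * ((1+al)/lam * r + 2/s)
  - n/r * (1/lam + 2) * (r/lam + 2/s).
Definition y1 (al m n lam : R) : R :=
  let r := r0 al m n lam in let s := s0 al m n lam in
  - (lam + bb al m n lam) * r * (((1+al)/lam * r + 2/s) / Delta1 al m n lam).
Definition z1 (al m n lam : R) : R :=
  let r := r0 al m n lam in
  - (lam + bb al m n lam) * r * ((n/r * (1/lam + 2)) / Delta1 al m n lam).

Definition lim_minfty (f : R -> R) (l : R) : Prop :=
  forall eps, 0 < eps -> exists M, forall x, x < M -> Rabs (f x - l) < eps.
Definition lim_pinfty (f : R -> R) (l : R) : Prop :=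
  forall eps, 0 < eps -> exists M, forall x, M < x -> Rabs (f x - l) < eps.
Definition rlim0 (f : R -> R) (l : R) : Prop :=
  limit1_in f (fun x => 0 < x) l 0.
Definition bigO_infty (f g : R -> R) : Prop :=
  exists C M, forall x, M < x -> Rabs (f x) <= C * Rabs (g x).

Definition solves_S (al m n lam : R) (p q r s : R -> R) : Prop :=
  forall eta,
    derivable_pt_lim p eta (Fp al m n lam (p eta) (q eta) (r eta) (s eta)) /\
    derivable_pt_lim q eta (Fq al m n lam (p eta) (q eta) (r eta) (s eta)) /\
    derivable_pt_lim r eta (Fr_rhs al m n lam (p eta) (q eta) (r eta) (s eta) / n) /\
    derivable_pt_lim s eta (Fs al m n lam (p eta) (q eta) (r eta) (s eta)).

Definition heteroclinic_M0_M1 (al m n lam : R) (p q r s : R -> R) : Prop :=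
  solves_S al m n lam p q r s /\
  lim_minfty p 0 /\ lim_minfty q 0 /\
  lim_minfty r (r0 al m n lam) /\ lim_minfty s (s0 al m n lam) /\
  lim_pinfty p 0 /\ lim_pinfty q 1 /\
  lim_pinfty r (r1 al m n lam) /\ lim_pinfty s (s1 al m n lam).

Definition leaves_M0_along_X01 (al m n lam kappa : R) (p q r s : R -> R) : Prop :=
  lim_minfty (fun eta => exp (-2*eta) * (p eta - 0)) (kappa * 1) /\
  lim_minfty (fun eta => exp (-2*eta) * (q eta - 0))
             (kappa * (bb al m n lam * r0 al m n lam)) /\
  lim_minfty (fun eta => exp (-2*eta) * (r eta - r0 al m n lam))
             (kappa * y1 al m n lam) /\
  lim_minfty (fun eta => exp (-2*eta) * (s eta - s0 al m n lam))
             (kappa * z1 al m n lam).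

Definition at_log (f : R -> R) (eta0 xi : R) : R := f (ln xi - eta0).

Definition GammaF al m n (p r s : R -> R) eta0 xi : R :=
  Rpower xi (- a1 al m n) * Rpower (at_log p eta0 xi) ((1+al)/Dd al m n)
  * Rpower (at_log r eta0 xi) (n/Dd al m n) * Rpower (at_log s eta0 xi) (al/Dd al m n).
Definition VF al m n lam (p q r s : R -> R) eta0 xi : R :=
  / bb al m n lam * Rpower xi (- b1 al m n)
  * Rpower (at_log p eta0 xi) (-(al-m-n)/Dd al m n) * at_log q eta0 xi
  * Rpower (at_log r eta0 xi) (n/Dd al m n) * Rpower (at_log s eta0 xi) (al/Dd al m n).
Definition ThetaF al m n (p r s : R -> R) eta0 xi : R :=
  Rpower xi (- c1 al m n) * Rpower (at_log p eta0 xi) ((1+m+n)/Dd al m n)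
  * Rpower (at_log r eta0 xi) (2*n/Dd al m n)
  * Rpower (at_log s eta0 xi) (-(1-m-n)/Dd al m n).
Definition SigmaF al m n (p r s : R -> R) eta0 xi : R :=
  Rpower xi (- d1 al m n) * Rpower (at_log p eta0 xi) (-(al-m-n)/Dd al m n)
  * Rpower (at_log r eta0 xi) (n/Dd al m n) * Rpower (at_log s eta0 xi) (al/Dd al m n).
Definition UF al m n (p r s : R -> R) eta0 xi : R :=
  Rpower xi (- a1 al m n) * Rpower (at_log p eta0 xi) ((1+al)/Dd al m n)
  * Rpower (at_log r eta0 xi) (1 + n/Dd al m n) * Rpower (at_log s eta0 xi) (al/Dd al m n).

(* behaviour at 0 of an even-type profile X with derivative dX:
   X(0)=X0, X'(0)=0, X''(0)=X2 (one-sided), X - X0 = X2 xi^2/2 + o(xi^2) *)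
Definition expansion0 (X dX : R -> R) (X0 X2 : R) : Prop :=
  rlim0 X X0 /\
  rlim0 (fun xi => (X xi - X0) / xi) 0 /\
  rlim0 (fun xi => (dX xi - 0) / xi) X2 /\
  rlim0 (fun xi => (X xi - X0 - X2 * xi^2 / 2) / xi^2) 0.

(* The five profiles are monomials [xi^c0 p^cp q^cq r^cr s^cs] in the orbit taken at
   [eta = ln xi - eta0], so their derivatives are read off from the logarithmic derivatives
   in (S), and the ODE system and the relation [Sigma = Theta^-al Gamma^m U^n] become
   identities between exponents.  A linear-ODE argument shows the orbit stays in the
   positive orthant.  As [xi -> 0], [p, q ~ kappa e^(2 eta)] and [(r, s) -> (r0, s0)]; the
   exponents satisfy [c0 + 2 cp + 2 cq = 0], so the profiles converge, [eta0] is the shift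
   giving [Gamma(0) = G0], and the second derivatives at 0 come from the eigenvector [X01],
   whose components [y1, z1] are negative.  As [xi -> oo], [(q, r, s)] tends to
   [(1, r1, s1)] and [ln p + k eta - (n ln r + al ln s + D ln q)/(al-m-n)], with
   [k = (1+m+n)/(al-m-n)], is nonincreasing and bounded below, so every profile is a power
   of [xi] times a bounded factor.  For [n] small all constants keep their signs at [n = 0]
   and [k <> 1], so the logarithmic alternative of (iii) does not occur. *)

From Pilot Require Import Defs.
From Stdlib Require Import Reals Lra Field.
From Coquelicot Require Import Coquelicot.
Open Scope R_scope.

Definition flim (F : (R -> Prop) -> Prop) (f : R -> R) (l : R) :=
  filterlim f F (locally l).

Section FilterLimits.
Context {F : (R -> Prop) -> Prop} {FF : Filter F}.

Lemma flim_const c : flim F (fun _ => c) c.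
Proof. apply filterlim_const. Qed.

Lemma flim_plus f g l1 l2 :
  flim F f l1 -> flim F g l2 -> flim F (fun x => f x + g x) (l1 + l2).
Proof. intros H1 H2. apply (filterlim_comp_2 f g Rplus H1 H2), (filterlim_plus l1 l2). Qed.

Lemma flim_mult f g l1 l2 :
  flim F f l1 -> flim F g l2 -> flim F (fun x => f x * g x) (l1 * l2).
Proof. intros H1 H2. apply (filterlim_comp_2 f g Rmult H1 H2), (filterlim_mult l1 l2). Qed.

Lemma flim_continuous f g l :
  flim F f l -> continuous g l -> flim F (fun x => g (f x)) (g l).
Proof. intros H1 H2. eapply filterlim_comp; eauto. Qed.

Lemma flim_opp f l : flim F f l -> flim F (fun x => - f x) (- l).
Proof. intros H. apply (flim_continuous f Ropp l H), (filterlim_opp l). Qed.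

Lemma flim_minus f g l1 l2 :
  flim F f l1 -> flim F g l2 -> flim F (fun x => f x - g x) (l1 - l2).
Proof. intros. apply flim_plus, flim_opp; auto. Qed.

Lemma flim_inv f l : flim F f l -> l <> 0 -> flim F (fun x => / f x) (/ l).
Proof. intros H Hl. apply (flim_continuous f Rinv l H), continuous_Rinv, Hl. Qed.

Lemma flim_exp f l : flim F f l -> flim F (fun x => exp (f x)) (exp l).
Proof. intros H. apply (flim_continuous f exp l H), continuous_exp. Qed.

Lemma flim_ln f l : flim F f l -> 0 < l -> flim F (fun x => ln (f x)) (ln l).
Proof. intros H Hl. apply (flim_continuous f ln l H), continuous_ln, Hl. Qed.

Lemma flim_ext_loc f g l1 l2 :
  F (fun x => f x = g x) -> l1 = l2 -> flim F f l1 -> flim F g l2.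
Proof. intros H E H1. subst. eapply filterlim_ext_loc; eauto. Qed.

Lemma flim_ext f g l1 l2 :
  (forall x, f x = g x) -> l1 = l2 -> flim F f l1 -> flim F g l2.
Proof. intros H. apply flim_ext_loc, filter_forall, H. Qed.

Lemma flim_abs_lt f l eps :
  flim F f l -> 0 < eps -> F (fun x => Rabs (f x - l) < eps).
Proof.
  intros H He. exact (proj1 (filterlim_locally f l) H (mkposreal _ He)).
Qed.

Lemma flim_gt f l c : flim F f l -> c < l -> F (fun x => c < f x).
Proof.
  intros H Hc. eapply filter_imp; [|apply (flim_abs_lt f l (l - c)); auto; lra].
  intros x Hx. apply Rabs_def2 in Hx. lra.
Qed.

Lemma flim_intro f l :
  (forall eps, 0 < eps -> F (fun x => Rabs (f x - l) < eps)) -> flim F f l.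
Proof. intros H. apply filterlim_locally. intros eps. exact (H eps (cond_pos eps)). Qed.

End FilterLimits.

Lemma flim_id x : flim (locally x) (fun y => y) x.
Proof. apply filterlim_id. Qed.

Lemma flim_comp {F G} f g l :
  filterlim f F G -> flim G g l -> flim F (fun x => g (f x)) l.
Proof. intros. eapply filterlim_comp; eauto. Qed.

Lemma lim_minfty_flim f l : lim_minfty f l -> flim (Rbar_locally m_infty) f l.
Proof.
  intros H. apply flim_intro. intros eps He. destruct (H eps He) as [M HM].
  exists M. auto.
Qed.

Lemma at_right0_ex (P : R -> Prop) :
  at_right 0 P -> exists d, 0 < d /\ forall y, 0 < y < d -> P y.
Proof.
  intros [d Hd]. exists d. split; [apply cond_pos|]. intros y Hy. apply Hd; [|lra].
  change (Rabs (y - 0) < d). rewrite Rminus_0_r, Rabs_right; lra.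
Qed.

Lemma at_right0_in (P : R -> Prop) d :
  0 < d -> (forall y, 0 < y < d -> P y) -> at_right 0 P.
Proof.
  intros Hd H. exists (mkposreal d Hd). intros y Hy Hy0. apply H. split; auto.
  change (Rabs (y - 0) < d) in Hy. rewrite Rminus_0_r, Rabs_right in Hy; lra.
Qed.

Lemma at_right0_pos : at_right 0 (fun x => 0 < x).
Proof. apply (at_right0_in _ 1); [lra | tauto]. Qed.

Lemma flim_at_right0_id : flim (at_right 0) (fun x => x) 0.
Proof.
  apply flim_intro. intros eps He. apply (at_right0_in _ eps He).
  intros y Hy. rewrite Rminus_0_r, Rabs_right; lra.
Qed.

Ltac flim_step :=
  first [ assumption | lazymatch goal with
  | |- flim _ (fun _ => _ + _) _ => apply flim_plus
  | |- flim _ (fun _ => _ - _) _ => apply flim_minus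
  | |- flim _ (fun _ => _ * _) _ => apply flim_mult
  | |- flim _ (fun _ => - _) _ => apply flim_opp
  | |- flim _ (fun _ => / _) _ => apply flim_inv
  | |- flim (locally _) (fun y => y) _ => apply flim_id
  | |- flim (at_right 0) (fun y => y) _ => apply flim_at_right0_id
  | |- flim _ (fun _ => ?c) _ => apply (flim_const c)
  | |- _ <> 0 => first [ assumption | lra ]
  | |- filterlim ?f ?F (locally ?l) => change (flim F f l)
  (* unification may have eta-reduced [fun y => c * y] to [Rmult c] *)
  | |- flim ?F (?op ?c) ?l => change (flim F (fun y => op c y) l)
  end ].
Ltac flim_auto := unfold Rdiv; repeat flim_step.

Lemma flim_rlim0 f l : flim (at_right 0) f l -> rlim0 f l.
Proof.
  intros H eps He. destruct (at_right0_ex _ (flim_abs_lt f l eps H He)) as [d [Hd Hf]].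
  exists d. split; auto. intros x [Hx1 Hx2]. apply Hf. simpl in Hx2. unfold R_dist in Hx2.
  rewrite Rminus_0_r, Rabs_right in Hx2; lra.
Qed.

Lemma rlim0_flim f l : rlim0 f l -> flim (at_right 0) f l.
Proof.
  intros H. apply flim_intro. intros eps He. destruct (H eps He) as [d [Hd Hd2]].
  exists (mkposreal d Hd). intros y Hy Hy0. apply (Hd2 y). split; auto.
Qed.

Lemma ln_shift_to_minfty eta0 :
  filterlim (fun x => ln x - eta0) (at_right 0) (Rbar_locally m_infty).
Proof.
  intros P [M HM]. apply (at_right0_in _ (exp (M + eta0)) (exp_pos _)). intros y Hy.
  apply HM. assert (ln y < M + eta0); [|lra].
  rewrite <- (ln_exp (M + eta0)). apply ln_increasing; lra.
Qed.

Lemma flim_at_log (K : R -> R) eta0 l :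
  flim (Rbar_locally m_infty) K l -> flim (at_right 0) (fun xi => K (ln xi - eta0)) l.
Proof. apply flim_comp, ln_shift_to_minfty. Qed.

Lemma is_derive_Rplus (f g : R -> R) (x a b : R) :
  is_derive f x a -> is_derive g x b -> is_derive (fun y => f y + g y) x (a + b).
Proof. intros. apply (is_derive_plus f g x a b); auto. Qed.

Lemma is_derive_Rminus (f g : R -> R) (x a b : R) :
  is_derive f x a -> is_derive g x b -> is_derive (fun y => f y - g y) x (a - b).
Proof. intros. apply (is_derive_minus f g x a b); auto. Qed.

Lemma is_derive_Rmult (f g : R -> R) (x a b : R) :
  is_derive f x a -> is_derive g x b ->
  is_derive (fun y => f y * g y) x (a * g x + f x * b).
Proof. intros. apply (is_derive_mult f g x a b); auto. intros; apply Rmult_comm. Qed.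

Lemma is_derive_Rscal (f : R -> R) (x a c : R) : is_derive f x a -> is_derive (fun y => c * f y) x (c * a).
Proof. intros. apply (is_derive_scal f x c a); auto. Qed.

Lemma is_derive_Rcomp (f g : R -> R) (x a b : R) :
  is_derive f x a -> is_derive g (f x) b -> is_derive (fun y => g (f y)) x (b * a).
Proof. intros. rewrite Rmult_comm. apply (is_derive_comp g f x b a); auto. Qed.

Lemma is_derive_Rexp (f : R -> R) (x a : R) : is_derive f x a -> is_derive (fun y => exp (f y)) x (exp (f x) * a).
Proof. intros. apply (is_derive_Rcomp f exp x a); auto. apply is_derive_exp. Qed.

Lemma is_derive_Rln (f : R -> R) (x a : R) :
  is_derive f x a -> 0 < f x -> is_derive (fun y => ln (f y)) x (/ f x * a).
Proof. intros. apply (is_derive_Rcomp f ln x a); auto. apply is_derive_ln; auto. Qed.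

Lemma is_derive_Rconst (c x : R) : is_derive (fun _ => c) x 0.
Proof. apply (is_derive_const c x). Qed.

Lemma is_derive_Rid (x : R) : is_derive (fun y => y) x 1.
Proof. apply (is_derive_id x). Qed.

Lemma is_derive_eq (f : R -> R) (x a b : R) : is_derive f x a -> a = b -> is_derive f x b.
Proof. intros; subst; auto. Qed.

Lemma is_derive_continuous (f : R -> R) (x a : R) : is_derive f x a -> continuous f x.
Proof.
  intros H. apply (ex_derive_continuous (K:=R_AbsRing) (V:=R_NormedModule)).
  exists a. exact H.
Qed.

(* Variation of constants: [f e^(-∫g)] is nondecreasing. *)
Lemma linear_ode_positive (f g h : R -> R) :
  (forall x, is_derive f x (f x * g x + h x)) -> (forall x, continuous g x) ->
  (forall x, 0 <= h x) -> (exists M, forall x, x < M -> 0 < f x) ->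
  forall x, 0 < f x.
Proof.
  intros Hf Hg Hh [M HM] x0.
  set (x1 := Rmin x0 (M - 1)).
  assert (Hx1 : 0 < f x1) by (apply HM; unfold x1; pose proof (Rmin_r x0 (M-1)); lra).
  set (G := fun y => RInt g x1 y).
  assert (HG : forall y, is_derive G y (g y)).
  { intros y. apply (is_derive_RInt g G x1).
    - apply filter_forall. intros b. apply (RInt_correct (V:=R_CompleteNormedModule)).
      apply ex_RInt_continuous. auto.
    - auto. }
  set (W := fun y => f y * exp (- G y)).
  assert (HW : forall y, is_derive W y (h y * exp (- G y))).
  { intros y. unfold W. eapply is_derive_eq.
    - apply is_derive_Rmult; [apply Hf|]. apply is_derive_Rexp, (is_derive_opp G y (g y)), HG.
    - simpl. unfold opp; simpl. ring. }
  assert (HW1 : W x1 = f x1).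
  { unfold W, G. rewrite RInt_point. simpl. unfold zero; simpl. rewrite Ropp_0, exp_0. ring. }
  assert (HWle : W x1 <= W x0).
  { destruct (Req_dec x1 x0) as [E|E]; [rewrite E; lra|].
    assert (x1 < x0) by (pose proof (Rmin_l x0 (M-1)); unfold x1 in *; lra).
    destruct (MVT_cor2 W (fun y => h y * exp (- G y)) x1 x0 H) as [c [Hc _]].
    { intros c _. apply is_derive_Reals, HW. }
    assert (0 <= h c * exp (- G c)) by (apply Rmult_le_pos; [apply Hh | apply Rlt_le, exp_pos]).
    assert (0 <= h c * exp (- G c) * (x0 - x1)) by (apply Rmult_le_pos; lra). lra. }
  assert (HW0 : 0 < f x0 * exp (- G x0)) by (fold (W x0); lra).
  pose proof (exp_pos (- G x0)). nra.
Qed.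

Lemma nonincreasing_from (f f' : R -> R) a :
  (forall x, a <= x -> is_derive f x (f' x)) -> (forall x, a <= x -> f' x <= 0) ->
  forall x, a <= x -> f x <= f a.
Proof.
  intros Hd Hn x Hx. destruct (Req_dec a x) as [E|E]; [subst; lra|].
  destruct (MVT_cor2 f f' a x) as [c [Hc1 Hc2]]; [lra | intros c Hc; apply is_derive_Reals, Hd; lra|].
  assert (f' c * (x - a) <= 0) by (apply Rmult_le_0_r; [apply Hn|]; lra). lra.
Qed.

Lemma primitive_bound_at_0 (f f' : R -> R) (j : nat) K d : 0 <= K ->
  (forall x, 0 < x -> is_derive f x (f' x)) -> flim (at_right 0) f 0 ->
  (forall c, 0 < c < d -> Rabs (f' c) <= K * c ^ j) ->
  forall x, 0 < x < d -> Rabs (f x) <= K * x ^ S j.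
Proof.
  intros HK Hd Hf Hf' x Hx.
  destruct (Rle_or_lt (Rabs (f x)) (K * x ^ S j)) as [Hle|Hgt]; auto. exfalso.
  set (g := Rabs (f x) - K * x ^ S j).
  destruct (at_right0_ex _ (flim_abs_lt _ _ g Hf ltac:(unfold g; lra))) as [d2 [Hd2 Hd3]].
  set (y := Rmin (x/2) (d2/2)).
  assert (Hy0 : 0 < y) by (unfold y; apply Rmin_pos; lra).
  assert (Hyx : y < x) by (unfold y; pose proof (Rmin_l (x/2) (d2/2)); lra).
  assert (Hyd : y < d2) by (unfold y; pose proof (Rmin_r (x/2) (d2/2)); lra).
  specialize (Hd3 y ltac:(lra)). rewrite Rminus_0_r in Hd3.
  destruct (MVT_cor2 f f' y x Hyx) as [c [Hc1 Hc2]].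
  { intros c Hc. apply is_derive_Reals, Hd. lra. }
  specialize (Hf' c ltac:(lra)).
  assert (0 <= K * c ^ j) by (eapply Rle_trans; [apply Rabs_pos | exact Hf']).
  assert (K * c ^ j <= K * x ^ j) by (apply Rmult_le_compat_l; [lra | apply pow_incr; lra]).
  assert (Rabs (f x - f y) = Rabs (f' c) * (x - y))
    by (rewrite Hc1, Rabs_mult, (Rabs_right (x - y)) by lra; auto).
  assert (Rabs (f x) <= Rabs (f x - f y) + Rabs (f y)).
  { replace (f x) with ((f x - f y) + f y) at 1 by ring. apply Rabs_triang. }
  assert (Rabs (f' c) * (x - y) <= K * x ^ j * x)
    by (apply Rmult_le_compat; try lra; apply Rabs_pos).
  unfold g in Hd3. replace (K * x ^ S j) with (K * x ^ j * x) in Hd3 by (simpl; ring). lra.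
Qed.

Lemma little_o_primitive (f f' : R -> R) (j : nat) :
  (forall x, 0 < x -> is_derive f x (f' x)) ->
  flim (at_right 0) f 0 ->
  flim (at_right 0) (fun x => f' x / x ^ j) 0 ->
  flim (at_right 0) (fun x => f x / x ^ (S j)) 0.
Proof.
  intros Hd Hf Hf'. apply flim_intro. intros eps He.
  destruct (at_right0_ex _ (flim_abs_lt _ _ (eps/2) Hf' ltac:(lra))) as [d [Hd0 Hd1]].
  apply (at_right0_in _ d Hd0). intros x Hx.
  assert (Hbound : Rabs (f x) <= eps/2 * x ^ S j).
  { apply (primitive_bound_at_0 f f' j _ d); auto; [lra|]. intros c Hc.
    specialize (Hd1 c Hc). rewrite Rminus_0_r in Hd1.
    assert (Hcj : 0 < c ^ j) by (apply pow_lt; lra).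
    unfold Rdiv in Hd1. rewrite Rabs_mult, Rabs_inv, (Rabs_right (c^j)) in Hd1 by lra.
    apply (Rmult_lt_compat_r (c^j)) in Hd1; auto. rewrite Rmult_assoc, Rinv_l in Hd1 by lra. lra. }
  assert (Hxj : 0 < x ^ S j) by (apply pow_lt; lra).
  rewrite Rminus_0_r. unfold Rdiv. rewrite Rabs_mult, Rabs_inv, (Rabs_right (x ^ S j)) by lra.
  apply (Rmult_lt_reg_r (x ^ S j)); auto. rewrite Rmult_assoc, Rinv_l by lra.
  assert (eps/2 * x^S j < eps * x^S j) by (apply Rmult_lt_compat_r; lra). lra.
Qed.

Lemma eventually_right0 (P : R -> Prop) : (forall x, 0 < x -> P x) -> at_right 0 P.
Proof. intros H. eapply filter_imp; [exact H | exact at_right0_pos]. Qed.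

Lemma expansion0_of_derivative (X dX : R -> R) X0 X2 :
  (forall x, 0 < x -> is_derive X x (dX x)) -> flim (at_right 0) X X0 ->
  flim (at_right 0) (fun x => dX x / x) X2 -> expansion0 X dX X0 X2.
Proof.
  intros Hd HX HdX.
  set (f := fun x => X x - X0 - X2 * x^2 / 2).
  set (f' := fun x => dX x - X2 * x).
  assert (Hf : forall x, 0 < x -> is_derive f x (f' x)).
  { intros x Hx. unfold f, f'. eapply is_derive_eq.
    - apply is_derive_Rminus; [apply is_derive_Rminus; [apply Hd; auto | apply is_derive_Rconst]|].
      apply (is_derive_ext (fun y => X2 / 2 * (y * y))); [intros y; simpl; field|].
      apply is_derive_Rscal, is_derive_Rmult; apply is_derive_Rid.
    - simpl. field. }
  assert (Lf : flim (at_right 0) f 0).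
  { apply (flim_ext f f (X0 - X0 - X2 * 0^2/2)); [reflexivity | simpl; field|].
    unfold f; simpl. flim_auto. }
  assert (Lf' : flim (at_right 0) (fun x => f' x / x ^ 1) 0).
  { apply (flim_ext_loc (fun x => dX x / x - X2) _ (X2 - X2)); [|ring|flim_auto].
    apply eventually_right0. intros x Hx. unfold f'. simpl. field. lra. }
  pose proof (little_o_primitive f f' 1 Hf Lf Lf') as L2.
  split; [|split; [|split]]; apply flim_rlim0; auto.
  - apply (flim_ext_loc (fun x => x * (f x / x ^ 2) + X2 / 2 * x) _ (0 * 0 + X2/2 * 0)); [|ring|].
    + apply eventually_right0. intros x Hx. unfold f. simpl. field. lra.
    + flim_auto.
  - apply (flim_ext (fun x => dX x / x) _ X2 X2); auto. intros x. unfold Rminus. rewrite Ropp_0, Rplus_0_r. auto.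
Qed.

Lemma cubic_expansion_of_primitive (V U : R -> R) U0 U2 :
  (forall x, 0 < x -> is_derive V x (U x)) -> flim (at_right 0) V 0 ->
  flim (at_right 0) (fun x => (U x - U0 - U2 * x^2/2) / x^2) 0 ->
  flim (at_right 0) (fun x => (V x - U0 * x - U2 * x^3 / 6) / x^3) 0.
Proof.
  intros Hd HV HU.
  set (f := fun x => V x - U0 * x - U2 * x^3 / 6).
  set (f' := fun x => U x - U0 - U2 * x^2 / 2).
  assert (Hf : forall x, 0 < x -> is_derive f x (f' x)).
  { intros x Hx. unfold f, f'. eapply is_derive_eq.
    - apply is_derive_Rminus; [apply is_derive_Rminus; [apply Hd; auto | apply is_derive_Rscal, is_derive_Rid]|].
      apply (is_derive_ext (fun y => U2 / 6 * (y * (y * y)))); [intros y; simpl; field|].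
      apply is_derive_Rscal, is_derive_Rmult; [apply is_derive_Rid|].
      apply is_derive_Rmult; apply is_derive_Rid.
    - simpl. field. }
  assert (Lf : flim (at_right 0) f 0).
  { apply (flim_ext f f (0 - U0 * 0 - U2 * 0^3/6)); [reflexivity | simpl; field|].
    unfold f; simpl. flim_auto. }
  exact (little_o_primitive f f' 2 Hf Lf HU).
Qed.

(* The last clause excludes the one value of [n] with [(1+m+n)/(al-m-n) = 1]. *)
Definition admissible (al m lam n : R) : Prop :=
  0 < Dd al m n /\ 0 < al - m - n /\ 0 < aa al m n lam /\ 0 < bb al m n lam /\
  0 < s0 al m n lam /\ 0 < Delta1 al m n lam /\ 0 < r1 al m n lam /\ 0 < s1 al m n lam /\
  1 + m + n <> al - m - n.

Section SmallN.
Variables al m lam : R.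
Hypotheses (Hal : 0 < al) (Hm : -1 < m) (Halm : m < al)
  (Hlam0 : 0 < lam) (Hlam1 : lam < 2*(al - m)/(1 + m)).

Lemma Dd_at_0 : Dd al m 0 = 1 + 2*al - m.
Proof. unfold Dd. ring. Qed.

Lemma aa_at_0_pos : 0 < aa al m 0 lam.
Proof.
  unfold aa. rewrite Dd_at_0. unfold Rdiv.
  assert (0 < / (1+2*al-m)) by (apply Rinv_0_lt_compat; lra).
  assert (0 < (2 + 2*al - 0) * / (1 + 2*al - m)) by (apply Rmult_lt_0_compat; lra).
  assert (0 < 2*(1+al) * / (1 + 2*al - m) * lam) by (repeat apply Rmult_lt_0_compat; lra).
  lra.
Qed.

Lemma s0_at_0 : s0 al m 0 lam = (1+m)/(1+al).
Proof. unfold s0, r0. pose proof aa_at_0_pos. field. split; lra. Qed.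

Lemma bb_at_0_pos : 0 < bb al m 0 lam.
Proof.
  unfold bb. rewrite Dd_at_0. unfold Rdiv.
  assert (0 < / (1+2*al-m)) by (apply Rinv_0_lt_compat; lra).
  assert (0 < (1+m) * / (1 + 2*al - m)) by (apply Rmult_lt_0_compat; lra).
  assert (0 < (1+m+0) * / (1 + 2*al - m) * lam) by (repeat apply Rmult_lt_0_compat; lra).
  lra.
Qed.

Lemma Delta1_at_0_pos : 0 < Delta1 al m 0 lam.
Proof.
  assert (Hr : 0 < r0 al m 0 lam) by exact aa_at_0_pos.
  assert (Hs : 0 < s0 al m 0 lam < 1).
  { rewrite s0_at_0. split; [apply Rdiv_lt_0_compat; lra|].
    apply (Rmult_lt_reg_r (1+al)); [lra|]. unfold Rdiv. rewrite Rmult_assoc, Rinv_l by lra. lra. }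
  unfold Delta1. fold (r0 al m 0 lam) (s0 al m 0 lam).
  replace (0 / r0 al m 0 lam) with 0 by (unfold Rdiv; ring).
  assert (0 < (1+al)/lam) by (apply Rdiv_lt_0_compat; lra).
  assert (0 < 2 / s0 al m 0 lam) by (apply Rdiv_lt_0_compat; lra).
  assert (0 < (1 + al)/lam * r0 al m 0 lam) by (apply Rmult_lt_0_compat; lra).
  assert (0 < (1 - s0 al m 0 lam)/lam) by (apply Rdiv_lt_0_compat; lra).
  assert (0 < (1 - s0 al m 0 lam) / lam * ((1 + al) / lam * r0 al m 0 lam + 2 / s0 al m 0 lam))
    by (apply Rmult_lt_0_compat; lra).
  lra.
Qed.

(* This is where the bound [lam < 2(al-m)/(1+m)] is used. *)
Lemma r1_at_0_pos : 0 < r1 al m 0 lam.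
Proof.
  replace (r1 al m 0 lam) with ((1+al)*(2*(al-m) - lam*(1+m)) / ((1+2*al-m)*(al-m)))
    by (unfold r1, aa; rewrite Dd_at_0; field; split; lra).
  assert (lam * (1+m) < 2*(al-m)).
  { apply (Rmult_lt_compat_r (1+m)) in Hlam1; [|lra]. unfold Rdiv in Hlam1.
    rewrite Rmult_assoc, Rinv_l in Hlam1 by lra. lra. }
  apply Rdiv_lt_0_compat; apply Rmult_lt_0_compat; lra.
Qed.

Lemma s1_at_0 : s1 al m 0 lam = (1+m)/(1+al).
Proof. unfold s1. pose proof r1_at_0_pos. field. split; lra. Qed.

Lemma admissible_small_n : exists n1, 0 < n1 /\ forall n, 0 < n < n1 -> admissible al m lam n.
Proof.
  assert (Hr0 : r0 al m 0 lam <> 0) by (pose proof aa_at_0_pos; unfold r0; lra).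
  assert (H1a : (1+al) * r0 al m 0 lam <> 0) by (apply Rmult_integral_contrapositive; split; lra).
  assert (Hs0 : 0 < s0 al m 0 lam) by (rewrite s0_at_0; apply Rdiv_lt_0_compat; lra).
  assert (Hs1 : 0 < s1 al m 0 lam) by (rewrite s1_at_0; apply Rdiv_lt_0_compat; lra).
  pose proof r1_at_0_pos as Hr1.
  assert (Hr1n : (1+al) * r1 al m 0 lam <> 0) by (apply Rmult_integral_contrapositive; split; lra).
  assert (HD : Dd al m 0 <> 0) by (rewrite Dd_at_0; lra).
  assert (Hl : lam <> 0) by lra.
  assert (Hal1 : 1 + al <> 0) by lra.
  assert (Hem : al - m - 0 <> 0) by lra.
  assert (Hs0n : s0 al m 0 lam <> 0) by lra.
  assert (cD : flim (locally 0) (fun n => Dd al m n) (Dd al m 0)) by (unfold Dd; flim_auto).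
  assert (cE : flim (locally 0) (fun n => al - m - n) (al - m - 0)) by flim_auto.
  assert (ca : flim (locally 0) (fun n => aa al m n lam) (aa al m 0 lam)) by (unfold aa; flim_auto).
  assert (cb : flim (locally 0) (fun n => bb al m n lam) (bb al m 0 lam)) by (unfold bb; flim_auto).
  assert (cr0 : flim (locally 0) (fun n => r0 al m n lam) (r0 al m 0 lam)) by (unfold r0; flim_auto).
  assert (cs0 : flim (locally 0) (fun n => s0 al m n lam) (s0 al m 0 lam)) by (unfold s0; flim_auto).
  assert (cDe : flim (locally 0) (fun n => Delta1 al m n lam) (Delta1 al m 0 lam))
    by (unfold Delta1; flim_auto).
  assert (cr1 : flim (locally 0) (fun n => r1 al m n lam) (r1 al m 0 lam)) by (unfold r1; flim_auto).
  assert (cs1 : flim (locally 0) (fun n => s1 al m n lam) (s1 al m 0 lam)) by (unfold s1; flim_auto).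
  assert (HDp : 0 < Dd al m 0) by (rewrite Dd_at_0; lra).
  assert (HEp : 0 < al - m - 0) by lra.
  pose proof (filter_and _ _ (flim_gt _ _ 0 cD HDp)
    (filter_and _ _ (flim_gt _ _ 0 cE HEp)
    (filter_and _ _ (flim_gt _ _ 0 ca aa_at_0_pos)
    (filter_and _ _ (flim_gt _ _ 0 cb bb_at_0_pos)
    (filter_and _ _ (flim_gt _ _ 0 cs0 Hs0)
    (filter_and _ _ (flim_gt _ _ 0 cDe Delta1_at_0_pos)
    (filter_and _ _ (flim_gt _ _ 0 cr1 Hr1) (flim_gt _ _ 0 cs1 Hs1)))))))) as [d Hd].
  set (kb := if Rle_dec (al - 1 - 2*m) 0 then 1 else (al - 1 - 2*m)/2).
  assert (Hkb : 0 < kb /\ forall n, 0 < n < kb -> 1 + m + n <> al - m - n)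
    by (unfold kb; destruct (Rle_dec (al - 1 - 2*m) 0); split; intros; lra).
  exists (Rmin d kb). split; [apply Rmin_pos; [apply cond_pos | tauto]|].
  intros n Hn.
  pose proof (Rmin_l d kb). pose proof (Rmin_r d kb).
  assert (Hb : ball 0 d n) by (change (Rabs (n - 0) < d); rewrite Rminus_0_r, Rabs_right; lra).
  destruct (Hd n Hb) as (g1 & g2 & g3 & g4 & g5 & g6 & g7 & g8).
  repeat split; auto. apply (proj2 Hkb). lra.
Qed.

End SmallN.

Lemma y1_neg_z1_neg al m lam n : 0 < al -> -1 < m -> 0 < lam -> 0 < n -> admissible al m lam n ->
  y1 al m n lam < 0 /\ z1 al m n lam < 0.
Proof.
  intros Hal Hm Hl Hn (g1 & g2 & g3 & g4 & g5 & g6 & g7 & g8 & g9).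
  assert (Hr0 : 0 < r0 al m n lam) by (unfold r0; auto).
  assert (0 < lam + bb al m n lam) by lra.
  assert (0 < (1+al)/lam * r0 al m n lam) by (apply Rmult_lt_0_compat; [apply Rdiv_lt_0_compat|]; lra).
  assert (0 < 2 / s0 al m n lam) by (apply Rdiv_lt_0_compat; lra).
  assert (0 < 1/lam) by (apply Rdiv_lt_0_compat; lra).
  assert (0 < n / r0 al m n lam) by (apply Rdiv_lt_0_compat; lra).
  split.
  - unfold y1. fold (r0 al m n lam) (s0 al m n lam).
    assert (0 < ((1 + al) / lam * r0 al m n lam + 2 / s0 al m n lam) / Delta1 al m n lam)
      by (apply Rdiv_lt_0_compat; lra).
    assert (0 < (lam + bb al m n lam) * r0 al m n lam
              * (((1 + al) / lam * r0 al m n lam + 2 / s0 al m n lam) / Delta1 al m n lam))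
      by (apply Rmult_lt_0_compat; [apply Rmult_lt_0_compat|]; lra).
    lra.
  - unfold z1. fold (r0 al m n lam).
    assert (0 < (n / r0 al m n lam * (1 / lam + 2)) / Delta1 al m n lam)
      by (apply Rdiv_lt_0_compat; [apply Rmult_lt_0_compat|]; lra).
    assert (0 < (lam + bb al m n lam) * r0 al m n lam
              * ((n / r0 al m n lam * (1 / lam + 2)) / Delta1 al m n lam))
      by (apply Rmult_lt_0_compat; [apply Rmult_lt_0_compat|]; lra).
    lra.
Qed.

Definition positive_orbit (p q r s : R -> R) : Prop :=
  forall x, 0 < p x /\ 0 < q x /\ 0 < r x /\ 0 < s x.

Lemma eventually_positive_at_minfty u l :
  lim_minfty u l -> 0 < l -> exists M, forall x, x < M -> 0 < u x.
Proof.
  intros H Hl. destruct (H l Hl) as [M HM]. exists M. intros x Hx.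
  specialize (HM x Hx). apply Rabs_def2 in HM. lra.
Qed.

Lemma eventually_positive_scaled (u : R -> R) l :
  lim_minfty (fun x => exp (-2*x) * (u x - 0)) l -> 0 < l ->
  exists M, forall x, x < M -> 0 < u x.
Proof.
  intros H Hl. destruct (eventually_positive_at_minfty _ _ H Hl) as [M HM].
  exists M. intros x Hx. specialize (HM x Hx). pose proof (exp_pos (-2*x)). nra.
Qed.

(* Each equation of (S) has the form [u' = u g + h] with [h >= 0]. *)
Lemma heteroclinic_positive al m n lam p q r s kappa :
  0 < al -> 0 < lam -> 0 < n -> 0 < bb al m n lam -> 0 < r0 al m n lam ->
  0 < s0 al m n lam -> 0 < kappa ->
  heteroclinic_M0_M1 al m n lam p q r s -> leaves_M0_along_X01 al m n lam kappa p q r s ->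
  positive_orbit p q r s.
Proof.
  intros Hal Hl Hn Hb Hr0 Hs0 Hk [HS [_ [_ [Hr1 [Hs1 _]]]]] [Lp [Lq _]].
  assert (Hcont : forall x, flim (locally x) p (p x) /\ flim (locally x) q (q x) /\
                            flim (locally x) r (r x) /\ flim (locally x) s (s x)).
  { intros x. destruct (HS x) as (Dp & Dq & Dr & Ds).
    repeat split; eapply is_derive_continuous, is_derive_Reals; eassumption. }
  assert (Hlam : lam * (1+al) <> 0) by (apply Rmult_integral_contrapositive; split; lra).
  assert (Hn0 : n <> 0) by lra. assert (Hl0 : lam <> 0) by lra. assert (Hal1 : 1+al <> 0) by lra.
  assert (Pp : forall x, 0 < p x).
  { apply (linear_ode_positive p (fun x => 1/lam * (r x - aa al m n lam) + 2 - lam * p x * r x - q x)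
      (fun _ => 0)).
    - intros x. eapply is_derive_eq; [apply is_derive_Reals, HS|]. unfold Fp. ring.
    - intros x. destruct (Hcont x) as (Cp & Cq & Cr & Cs). unfold continuous. flim_auto.
    - intros; lra.
    - apply (eventually_positive_scaled p (kappa * 1)); auto; lra. }
  assert (Pr : forall x, 0 < r x).
  { apply (linear_ode_positive r (fun x => ((al-m-n)/(lam*(1+al)) * (r x - aa al m n lam)
       + lam*p x*r x + q x + al/lam * r x * (s x - (1+m+n)/(1+al)) + n*al/(lam*(1+al))) / n)
       (fun _ => 0)).
    - intros x. eapply is_derive_eq; [apply is_derive_Reals, HS|]. unfold Fr_rhs. field. tauto.
    - intros x. destruct (Hcont x) as (Cp & Cq & Cr & Cs). unfold continuous. flim_auto.
    - intros; lra.
    - exact (eventually_positive_at_minfty _ _ Hr1 Hr0). }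
  assert (Ps : forall x, 0 < s x).
  { apply (linear_ode_positive s (fun x => (al-m-n)/(lam*(1+al)) * (r x - aa al m n lam)
       + lam*p x*r x + q x - 1/lam * r x * (s x - (1+m+n)/(1+al)) - n/(lam*(1+al))) (fun _ => 0)).
    - intros x. eapply is_derive_eq; [apply is_derive_Reals, HS|]. unfold Fs. ring.
    - intros x. destruct (Hcont x) as (Cp & Cq & Cr & Cs). unfold continuous. flim_auto.
    - intros; lra.
    - exact (eventually_positive_at_minfty _ _ Hs1 Hs0). }
  assert (Pq : forall x, 0 < q x).
  { apply (linear_ode_positive q (fun x => 1 - lam * p x * r x - q x)
      (fun x => bb al m n lam * p x * r x)).
    - intros x. eapply is_derive_eq; [apply is_derive_Reals, HS|]. unfold Fq. ring.
    - intros x. destruct (Hcont x) as (Cp & Cq & Cr & Cs). unfold continuous. flim_auto.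
    - intros x. specialize (Pp x). specialize (Pr x). apply Rlt_le, Rmult_lt_0_compat; [apply Rmult_lt_0_compat|]; lra.
    - apply (eventually_positive_scaled q (kappa * (bb al m n lam * r0 al m n lam))); auto.
      apply Rmult_lt_0_compat; auto. apply Rmult_lt_0_compat; auto. }
  intros x; auto.
Qed.

(* Logarithmic derivative, along the flow of (S), of [e^(c0 eta) p^cp q^cq r^cr s^cs]. *)
Definition log_rate al m n lam (c0 cp cq cr cs p q r s : R) : R :=
  c0 + cp * (Fp al m n lam p q r s / p) + cq * (Fq al m n lam p q r s / q)
     + cr * ((Fr_rhs al m n lam p q r s / n) / r) + cs * (Fs al m n lam p q r s / s).

Section Monomials.
Variables (p q r s : R -> R) (eta0 : R).

Definition monomial (c0 cp cq cr cs xi : R) : R :=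
  exp (c0 * ln xi + cp * ln (at_log p eta0 xi) + cq * ln (at_log q eta0 xi)
       + cr * ln (at_log r eta0 xi) + cs * ln (at_log s eta0 xi)).

Lemma monomial_mul c0 cp cq cr cs d0 dp dq dr ds xi :
  monomial c0 cp cq cr cs xi * monomial d0 dp dq dr ds xi =
  monomial (c0+d0) (cp+dp) (cq+dq) (cr+dr) (cs+ds) xi.
Proof. unfold monomial. rewrite <- exp_plus. f_equal. ring. Qed.

Lemma monomial_inv c0 cp cq cr cs xi :
  / monomial c0 cp cq cr cs xi = monomial (-c0) (-cp) (-cq) (-cr) (-cs) xi.
Proof. unfold monomial. rewrite <- exp_Ropp. f_equal. ring. Qed.

Lemma monomial_ext c0 cp cq cr cs d0 dp dq dr ds xi :
  c0 = d0 -> cp = dp -> cq = dq -> cr = dr -> cs = ds ->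
  monomial c0 cp cq cr cs xi = monomial d0 dp dq dr ds xi.
Proof. intros; subst; auto. Qed.

Lemma Rpower_monomial c0 cp cq cr cs xi y :
  Rpower (monomial c0 cp cq cr cs xi) y = monomial (y*c0) (y*cp) (y*cq) (y*cr) (y*cs) xi.
Proof. unfold Rpower. unfold monomial at 1. rewrite ln_exp. unfold monomial. f_equal. ring. Qed.

Lemma monomial_xi xi : 0 < xi -> xi = monomial 1 0 0 0 0 xi.
Proof. intros. unfold monomial. rewrite <- (exp_ln xi) at 1 by auto. f_equal. ring. Qed.

Hypothesis HP : positive_orbit p q r s.

Lemma monomial_p xi : at_log p eta0 xi = monomial 0 1 0 0 0 xi.
Proof.
  unfold monomial. rewrite <- (exp_ln (at_log p eta0 xi)) at 1 by apply HP.
  f_equal. ring.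
Qed.

Lemma monomial_q xi : at_log q eta0 xi = monomial 0 0 1 0 0 xi.
Proof.
  unfold monomial. rewrite <- (exp_ln (at_log q eta0 xi)) at 1 by apply HP.
  f_equal. ring.
Qed.

Lemma monomial_r xi : at_log r eta0 xi = monomial 0 0 0 1 0 xi.
Proof.
  unfold monomial. rewrite <- (exp_ln (at_log r eta0 xi)) at 1 by apply HP.
  f_equal. ring.
Qed.

Lemma monomial_s xi : at_log s eta0 xi = monomial 0 0 0 0 1 xi.
Proof.
  unfold monomial. rewrite <- (exp_ln (at_log s eta0 xi)) at 1 by apply HP.
  f_equal. ring.
Qed.

Lemma monomial_mul_p c0 cp cq cr cs xi :
  monomial c0 cp cq cr cs xi * at_log p eta0 xi = monomial c0 (cp+1) cq cr cs xi.
Proof. rewrite monomial_p, monomial_mul. apply monomial_ext; ring. Qed.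

Lemma monomial_mul_q c0 cp cq cr cs xi :
  monomial c0 cp cq cr cs xi * at_log q eta0 xi = monomial c0 cp (cq+1) cr cs xi.
Proof. rewrite monomial_q, monomial_mul. apply monomial_ext; ring. Qed.

Lemma monomial_mul_r c0 cp cq cr cs xi :
  monomial c0 cp cq cr cs xi * at_log r eta0 xi = monomial c0 cp cq (cr+1) cs xi.
Proof. rewrite monomial_r, monomial_mul. apply monomial_ext; ring. Qed.

Lemma monomial_div_q c0 cp cq cr cs xi :
  monomial c0 cp cq cr cs xi * / at_log q eta0 xi = monomial c0 cp (cq-1) cr cs xi.
Proof. rewrite monomial_q, monomial_inv, monomial_mul. apply monomial_ext; ring. Qed.

Lemma monomial_div_xi c0 cp cq cr cs xi : 0 < xi ->
  monomial c0 cp cq cr cs xi * / xi = monomial (c0-1) cp cq cr cs xi.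
Proof.
  intros H. rewrite (monomial_xi xi H) at 2. rewrite monomial_inv, monomial_mul.
  apply monomial_ext; ring.
Qed.

End Monomials.

Lemma is_derive_at_log (f : R -> R) df eta0 xi : 0 < xi -> is_derive f (ln xi - eta0) df ->
  is_derive (at_log f eta0) xi (df / xi).
Proof.
  intros Hx H. unfold at_log. eapply is_derive_eq.
  - apply (is_derive_Rcomp (fun x => ln x - eta0) f xi (/xi) df); auto.
    eapply is_derive_eq; [apply is_derive_Rminus; [apply is_derive_ln; auto | apply is_derive_Rconst]|].
    ring.
  - field. lra.
Qed.

Lemma is_derive_monomial al m n lam p q r s eta0 c0 cp cq cr cs xi :
  0 < n -> solves_S al m n lam p q r s -> positive_orbit p q r s -> 0 < xi ->
  is_derive (monomial p q r s eta0 c0 cp cq cr cs) xi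
    (monomial p q r s eta0 c0 cp cq cr cs xi *
      (log_rate al m n lam c0 cp cq cr cs (at_log p eta0 xi) (at_log q eta0 xi)
         (at_log r eta0 xi) (at_log s eta0 xi) / xi)).
Proof.
  intros Hn HS HP Hx. set (eta := ln xi - eta0).
  destruct (HS eta) as (Hp & Hq & Hr & Hs). destruct (HP eta) as (Pp & Pq & Pr & Ps).
  apply is_derive_Reals in Hp, Hq, Hr, Hs.
  unfold monomial. eapply is_derive_eq.
  - apply is_derive_Rexp.
    apply is_derive_Rplus; [apply is_derive_Rplus; [apply is_derive_Rplus; [apply is_derive_Rplus|]|]|];
      apply is_derive_Rscal; [apply is_derive_ln; auto|..];
      (apply is_derive_Rln; [apply is_derive_at_log|]); first [eassumption | auto].
  - unfold log_rate, at_log. fold eta. field. repeat split; lra.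
Qed.

Section Profiles.
Variables (al m n lam : R) (p q r s : R -> R) (eta0 : R).

Lemma GammaF_monomial xi :
  GammaF al m n p r s eta0 xi =
  monomial p q r s eta0 (-a1 al m n) ((1+al)/Dd al m n) 0 (n/Dd al m n) (al/Dd al m n) xi.
Proof. unfold GammaF, monomial, Rpower. rewrite <- !exp_plus. f_equal. ring. Qed.

Lemma UF_monomial xi :
  UF al m n p r s eta0 xi =
  monomial p q r s eta0 (-a1 al m n) ((1+al)/Dd al m n) 0 (1 + n/Dd al m n) (al/Dd al m n) xi.
Proof. unfold UF, monomial, Rpower. rewrite <- !exp_plus. f_equal. ring. Qed.

Lemma ThetaF_monomial xi :
  ThetaF al m n p r s eta0 xi =
  monomial p q r s eta0 (- Defs.c1 al m n) ((1+m+n)/Dd al m n) 0 (2*n/Dd al m n) (-(1-m-n)/Dd al m n) xi.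
Proof. unfold ThetaF, monomial, Rpower. rewrite <- !exp_plus. f_equal. ring. Qed.

Lemma SigmaF_monomial xi :
  SigmaF al m n p r s eta0 xi =
  monomial p q r s eta0 (- Defs.d1 al m n) (-(al-m-n)/Dd al m n) 0 (n/Dd al m n) (al/Dd al m n) xi.
Proof. unfold SigmaF, monomial, Rpower. rewrite <- !exp_plus. f_equal. ring. Qed.

Hypothesis HD : Dd al m n <> 0.

Lemma SigmaF_constitutive xi :
  SigmaF al m n p r s eta0 xi =
  Rpower (ThetaF al m n p r s eta0 xi) (-al) * Rpower (GammaF al m n p r s eta0 xi) m
  * Rpower (UF al m n p r s eta0 xi) n.
Proof.
  rewrite UF_monomial, SigmaF_monomial, ThetaF_monomial, GammaF_monomial, !Rpower_monomial,
    !monomial_mul.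
  unfold Defs.c1, Defs.d1, a1. unfold Dd in *. apply monomial_ext; field; auto.
Qed.

Hypothesis HP : positive_orbit p q r s.

Lemma VF_monomial xi :
  VF al m n lam p q r s eta0 xi =
  / bb al m n lam * monomial p q r s eta0 (- b1 al m n) (-(al-m-n)/Dd al m n) 1 (n/Dd al m n) (al/Dd al m n) xi.
Proof.
  unfold VF. rewrite (monomial_q p q r s eta0 HP xi). unfold monomial, Rpower.
  rewrite !Rmult_assoc. f_equal. rewrite <- !exp_plus. f_equal. ring.
Qed.

Lemma UF_eq_GammaF_r xi :
  UF al m n p r s eta0 xi = GammaF al m n p r s eta0 xi * at_log r eta0 xi.
Proof. rewrite UF_monomial, GammaF_monomial, monomial_mul_r by exact HP. apply monomial_ext; ring. Qed.

Lemma SigmaF_UF xi :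
  SigmaF al m n p r s eta0 xi * UF al m n p r s eta0 xi =
  ThetaF al m n p r s eta0 xi * (at_log r eta0 xi * at_log s eta0 xi).
Proof.
  rewrite UF_monomial, SigmaF_monomial, ThetaF_monomial, (monomial_r p q r s eta0 HP),
    (monomial_s p q r s eta0 HP), !monomial_mul.
  unfold Defs.c1, Defs.d1, a1. unfold Dd in *. apply monomial_ext; field; auto.
Qed.

Definition dGamma xi :=
  GammaF al m n p r s eta0 xi * (at_log r eta0 xi - aa al m n lam) / (lam * xi).
Definition dTheta xi :=
  ThetaF al m n p r s eta0 xi * (at_log r eta0 xi * at_log s eta0 xi - cc al m n lam) / (lam * xi).
Definition dSigma xi :=
  bb al m n lam * VF al m n lam p q r s eta0 xi + lam * xi * UF al m n p r s eta0 xi.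
Definition dU xi := dGamma xi * at_log r eta0 xi +
  GammaF al m n p r s eta0 xi * ((Fr_rhs al m n lam (at_log p eta0 xi) (at_log q eta0 xi)
     (at_log r eta0 xi) (at_log s eta0 xi) / n) / xi).

Hypotheses (Hn : 0 < n) (Hl : 0 < lam) (Hal1 : 1 + al <> 0) (Hb : bb al m n lam <> 0)
  (HS : solves_S al m n lam p q r s).

Lemma is_derive_GammaF xi : 0 < xi -> is_derive (GammaF al m n p r s eta0) xi (dGamma xi).
Proof.
  intros Hx. eapply is_derive_ext; [intros y; symmetry; apply GammaF_monomial|].
  eapply is_derive_eq; [apply (is_derive_monomial al m n lam); auto|].
  destruct (HP (ln xi - eta0)) as (P1 & P2 & P3 & P4).
  unfold dGamma. rewrite <- GammaF_monomial.
  unfold log_rate, at_log, Fp, Fq, Fr_rhs, Fs, a1, aa. unfold Dd in *. field. repeat split; lra.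
Qed.

Lemma is_derive_ThetaF xi : 0 < xi -> is_derive (ThetaF al m n p r s eta0) xi (dTheta xi).
Proof.
  intros Hx. eapply is_derive_ext; [intros y; symmetry; apply ThetaF_monomial|].
  eapply is_derive_eq; [apply (is_derive_monomial al m n lam); auto|].
  destruct (HP (ln xi - eta0)) as (P1 & P2 & P3 & P4).
  unfold dTheta. rewrite <- ThetaF_monomial.
  unfold log_rate, at_log, Fp, Fq, Fr_rhs, Fs, Defs.c1, aa, cc. unfold Dd in *. field. repeat split; lra.
Qed.

Lemma is_derive_VF xi : 0 < xi -> is_derive (VF al m n lam p q r s eta0) xi (UF al m n p r s eta0 xi).
Proof.
  intros Hx. eapply is_derive_ext; [intros y; symmetry; apply VF_monomial|].
  eapply is_derive_eq; [apply is_derive_Rscal, (is_derive_monomial al m n lam); auto|].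
  destruct (HP (ln xi - eta0)) as (P1 & P2 & P3 & P4).
  set (M := monomial p q r s eta0 (- b1 al m n) (- (al - m - n) / Dd al m n) 1 (n / Dd al m n) (al / Dd al m n)).
  replace (log_rate al m n lam (- b1 al m n) (- (al - m - n) / Dd al m n) 1 (n / Dd al m n) (al / Dd al m n)
    (at_log p eta0 xi) (at_log q eta0 xi) (at_log r eta0 xi) (at_log s eta0 xi))
    with (bb al m n lam * at_log p eta0 xi * at_log r eta0 xi / at_log q eta0 xi)
    by (unfold log_rate, at_log, Fp, Fq, Fr_rhs, Fs, b1, aa, bb; unfold Dd in *; field; repeat split; lra).
  transitivity (M xi * at_log p eta0 xi * at_log r eta0 xi * / at_log q eta0 xi * / xi);
    [unfold at_log in *; field; repeat split; lra|].
  unfold M. rewrite monomial_mul_p, monomial_mul_r, monomial_div_q, monomial_div_xi, UF_monomial by auto.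
  unfold b1, a1. unfold Dd in *. apply monomial_ext; field; auto.
Qed.

Lemma is_derive_SigmaF xi : 0 < xi -> is_derive (SigmaF al m n p r s eta0) xi (dSigma xi).
Proof.
  intros Hx. eapply is_derive_ext; [intros y; symmetry; apply SigmaF_monomial|].
  eapply is_derive_eq; [apply (is_derive_monomial al m n lam); auto|].
  destruct (HP (ln xi - eta0)) as (P1 & P2 & P3 & P4).
  set (M := monomial p q r s eta0 (- Defs.d1 al m n) (- (al - m - n) / Dd al m n) 0 (n / Dd al m n) (al / Dd al m n)).
  replace (log_rate al m n lam (- Defs.d1 al m n) (- (al - m - n) / Dd al m n) 0 (n / Dd al m n) (al / Dd al m n)
    (at_log p eta0 xi) (at_log q eta0 xi) (at_log r eta0 xi) (at_log s eta0 xi))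
    with (at_log q eta0 xi + lam * at_log p eta0 xi * at_log r eta0 xi)
    by (unfold log_rate, at_log, Fp, Fq, Fr_rhs, Fs, Defs.d1, aa, bb; unfold Dd in *; field; repeat split; lra).
  transitivity (M xi * at_log q eta0 xi * / xi
                + lam * xi * (M xi * at_log p eta0 xi * at_log r eta0 xi * / xi * / xi));
    [field; lra|].
  unfold M. rewrite monomial_mul_q, monomial_mul_p, monomial_mul_r, !monomial_div_xi by auto.
  unfold dSigma. rewrite VF_monomial, UF_monomial.
  rewrite <- Rmult_assoc, Rinv_r, Rmult_1_l by auto.
  unfold Defs.d1, b1, a1. unfold Dd in *.
  f_equal; [|f_equal]; apply monomial_ext; field; auto.
Qed.

Lemma is_derive_UF xi : 0 < xi -> is_derive (UF al m n p r s eta0) xi (dU xi).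
Proof.
  intros Hx. eapply is_derive_ext; [intros y; symmetry; apply UF_eq_GammaF_r|].
  apply is_derive_Rmult; [apply is_derive_GammaF; auto|].
  apply is_derive_at_log; auto. apply is_derive_Reals, HS.
Qed.

Lemma profiles_solve_ode xi : 0 < xi ->
  derivable_pt_lim (VF al m n lam p q r s eta0) xi (UF al m n p r s eta0 xi) /\
  dSigma xi = bb al m n lam * VF al m n lam p q r s eta0 xi + lam * xi * UF al m n p r s eta0 xi /\
  cc al m n lam * ThetaF al m n p r s eta0 xi + lam * xi * dTheta xi =
    SigmaF al m n p r s eta0 xi * UF al m n p r s eta0 xi /\
  aa al m n lam * GammaF al m n p r s eta0 xi + lam * xi * dGamma xi = UF al m n p r s eta0 xi /\
  SigmaF al m n p r s eta0 xi =
    Rpower (ThetaF al m n p r s eta0 xi) (-al) * Rpower (GammaF al m n p r s eta0 xi) m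
    * Rpower (UF al m n p r s eta0 xi) n.
Proof.
  intros Hx. repeat split.
  - apply is_derive_Reals, is_derive_VF, Hx.
  - rewrite SigmaF_UF. unfold dTheta. field. lra.
  - rewrite UF_eq_GammaF_r. unfold dGamma. field. lra.
  - apply SigmaF_constitutive.
Qed.

Lemma profiles_derivable xi : 0 < xi ->
  derivable_pt_lim (GammaF al m n p r s eta0) xi (dGamma xi) /\
  derivable_pt_lim (ThetaF al m n p r s eta0) xi (dTheta xi) /\
  derivable_pt_lim (SigmaF al m n p r s eta0) xi (dSigma xi) /\
  derivable_pt_lim (UF al m n p r s eta0) xi (dU xi).
Proof.
  intros Hx. repeat split; apply is_derive_Reals;
    [apply is_derive_GammaF | apply is_derive_ThetaF | apply is_derive_SigmaF | apply is_derive_UF];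
    exact Hx.
Qed.

End Profiles.

Lemma ln_eq_ln_scaled (f : R -> R) x :
  0 < f x -> ln (f x) = ln (exp (-2*x) * (f x - 0)) + 2*x.
Proof.
  intros H. rewrite ln_mult by (try apply exp_pos; lra). rewrite ln_exp, Rminus_0_r. ring.
Qed.

(* If [p, q ~ lp e^(2 eta), lq e^(2 eta)] as [eta -> -oo] and [c0 + 2 cp + 2 cq = 0], the
   powers of [xi = e^(eta + eta0)] cancel. *)
Lemma monomial_limit_at_0 p q r s eta0 c0 cp cq cr cs lp lq lr ls :
  positive_orbit p q r s ->
  flim (Rbar_locally m_infty) (fun x => exp (-2*x) * (p x - 0)) lp ->
  flim (Rbar_locally m_infty) (fun x => exp (-2*x) * (q x - 0)) lq ->
  flim (Rbar_locally m_infty) r lr -> flim (Rbar_locally m_infty) s ls ->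
  0 < lp -> 0 < lq -> 0 < lr -> 0 < ls ->
  c0 + 2*cp + 2*cq = 0 ->
  flim (at_right 0) (monomial p q r s eta0 c0 cp cq cr cs)
     (exp (c0 * eta0 + cp * ln lp + cq * ln lq + cr * ln lr + cs * ln ls)).
Proof.
  intros HP Lp Lq Lr Ls Hp Hq Hr Hs Hc.
  set (H := fun x => exp (c0 * eta0 + cp * ln (exp (-2*x) * (p x - 0))
             + cq * ln (exp (-2*x) * (q x - 0)) + cr * ln (r x) + cs * ln (s x))).
  assert (LH : flim (Rbar_locally m_infty) H
                 (exp (c0 * eta0 + cp * ln lp + cq * ln lq + cr * ln lr + cs * ln ls))).
  { unfold H. apply flim_exp. repeat apply flim_plus; try apply flim_const;
     (apply flim_mult; [apply flim_const | apply flim_ln; auto]). }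
  eapply flim_ext_loc; [|reflexivity | exact (flim_at_log _ eta0 _ LH)].
  apply eventually_right0. intros x Hx. unfold H, monomial, at_log.
  destruct (HP (ln x - eta0)) as (P1 & P2 & P3 & P4).
  rewrite (ln_eq_ln_scaled p (ln x - eta0)), (ln_eq_ln_scaled q (ln x - eta0)) by auto. f_equal.
  transitivity (c0 * eta0 + cp * ln (exp (-2 * (ln x - eta0)) * (p (ln x - eta0) - 0)) +
    cq * ln (exp (-2 * (ln x - eta0)) * (q (ln x - eta0) - 0)) + cr * ln (r (ln x - eta0)) +
    cs * ln (s (ln x - eta0)) + (c0 + 2*cp + 2*cq) * (ln x - eta0)); [rewrite Hc|]; ring.
Qed.

Lemma inv_square_at_log xi eta0 :
  0 < xi -> / (xi * xi) = exp (-2 * (ln xi - eta0)) * exp (-2 * eta0).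
Proof.
  intros H. rewrite <- exp_plus. replace (-2 * (ln xi - eta0) + -2 * eta0) with (- (ln xi + ln xi)) by ring.
  rewrite exp_Ropp, exp_plus, exp_ln by auto. reflexivity.
Qed.

Lemma cc_eq_aa_s0 al m n lam : aa al m n lam <> 0 -> Dd al m n <> 0 -> 1 + al <> 0 ->
  cc al m n lam = aa al m n lam * s0 al m n lam.
Proof.
  intros Ha HD Hal. unfold s0, r0, cc. unfold aa in *. unfold Dd in *.
  assert (N : 2 + 2*al - n + 2*(1+al)*lam <> 0).
  { intro E. apply Ha.
    replace ((2 + 2 * al - n) / (1 + 2 * al - m - n) + 2 * (1 + al) / (1 + 2 * al - m - n) * lam)
      with ((2 + 2*al - n + 2*(1+al)*lam) / (1 + 2*al - m - n)) by (field; auto).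
    rewrite E. unfold Rdiv; ring. }
  field. repeat split; auto.
Qed.

(* The [r]-row of [J(M0) X01 = 2 X01]. *)
Lemma eigenvector_r_row al m n lam :
  lam <> 0 -> n <> 0 -> Dd al m n <> 0 -> 1+al <> 0 -> r0 al m n lam <> 0 ->
  s0 al m n lam <> 0 -> Delta1 al m n lam <> 0 ->
  r0 al m n lam * (y1 al m n lam * ((al-m-n)/(lam*(1+al)) + al/lam*(s0 al m n lam - (1+m+n)/(1+al)))
   + lam * r0 al m n lam + bb al m n lam * r0 al m n lam + al/lam * r0 al m n lam * z1 al m n lam) / n
  = 2 * y1 al m n lam.
Proof.
  intros Hl Hn HD Ha Hr Hs HDe.
  unfold y1, z1. unfold Delta1 in *. unfold s0 in *. set (RR := r0 al m n lam) in *.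
  assert (N : (1 + m + n) * RR - n <> 0).
  { intro E. apply Hs.
    replace ((1 + m + n) / (1 + al) - n / ((1 + al) * RR))
      with (((1 + m + n) * RR - n) / ((1+al)*RR)) by (field; auto).
    rewrite E. unfold Rdiv; ring. }
  set (W := (RR * (1 + al) - ((1 + m + n) * RR - n)) *
            ((1 + al) * RR * ((1 + m + n) * RR - n) + 2 * (RR * (1 + al)) * lam) -
            n * (1 + 2 * lam) * (RR * ((1 + m + n) * RR - n) + 2 * (RR * (1 + al)) * lam) * (1 + al)).
  assert (X : W <> 0).
  { intro E. apply HDe.
    replace ((1 - ((1 + m + n) / (1 + al) - n / ((1 + al) * RR))) / lam *
      ((1 + al) / lam * RR + 2 / ((1 + m + n) / (1 + al) - n / ((1 + al) * RR))) -
      n / RR * (1 / lam + 2) * (RR / lam + 2 / ((1 + m + n) / (1 + al) - n / ((1 + al) * RR))))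
      with (W / ((1+al)*RR*lam*lam*((1 + m + n) * RR - n))) by (unfold W; field; repeat split; auto).
    rewrite E. unfold Rdiv; ring. }
  unfold W in X. field. repeat split; auto.
Qed.

Lemma Fr_rhs_centered al m n lam p q r s :
  r0 al m n lam <> 0 -> lam <> 0 -> 1+al <> 0 ->
  Fr_rhs al m n lam p q r s =
  r * ((r - r0 al m n lam) * ((al-m-n)/(lam*(1+al)) + al/lam*(s - (1+m+n)/(1+al)))
       + lam*p*r + q + al/lam * r0 al m n lam * (s - s0 al m n lam)).
Proof. intros. unfold Fr_rhs, s0. unfold r0 in *. field. repeat split; auto. Qed.

Section NearZero.
Variables (al m n lam : R) (p q r s : R -> R) (kappa G0 : R).
Hypotheses (Hal : 0 < al) (Hm : -1 < m) (Hn : 0 < n) (Hl : 0 < lam)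
  (Hadm : admissible al m lam n) (Hhet : heteroclinic_M0_M1 al m n lam p q r s)
  (Hk : 0 < kappa) (Hlv : leaves_M0_along_X01 al m n lam kappa p q r s)
  (HP : positive_orbit p q r s) (HG0 : 0 < G0).

Lemma admissible_facts :
  Dd al m n <> 0 /\ 1 + al <> 0 /\ bb al m n lam <> 0 /\ 0 < r0 al m n lam /\
  0 < s0 al m n lam /\ 0 < aa al m n lam /\ 0 < bb al m n lam.
Proof. destruct Hadm as (g1 & g2 & g3 & g4 & g5 & _). unfold r0. repeat split; lra. Qed.

Lemma orbit_limits_at_minfty :
  flim (Rbar_locally m_infty) (fun x => exp (-2*x) * (p x - 0)) (kappa * 1) /\
  flim (Rbar_locally m_infty) (fun x => exp (-2*x) * (q x - 0)) (kappa * (bb al m n lam * r0 al m n lam)) /\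
  flim (Rbar_locally m_infty) (fun x => exp (-2*x) * (r x - r0 al m n lam)) (kappa * y1 al m n lam) /\
  flim (Rbar_locally m_infty) (fun x => exp (-2*x) * (s x - s0 al m n lam)) (kappa * z1 al m n lam) /\
  flim (Rbar_locally m_infty) r (r0 al m n lam) /\ flim (Rbar_locally m_infty) s (s0 al m n lam).
Proof.
  destruct Hhet as (_ & _ & _ & H3 & H4 & _). destruct Hlv as (L1 & L2 & L3 & L4).
  repeat split; apply lim_minfty_flim; auto.
Qed.

Definition limit_at_0 eta0 (c0 cp cq cr cs : R) :=
  exp (c0 * eta0 + cp * ln (kappa * 1) + cq * ln (kappa * (bb al m n lam * r0 al m n lam))
       + cr * ln (r0 al m n lam) + cs * ln (s0 al m n lam)).

Lemma monomial_limit_along_orbit eta0 c0 cp cq cr cs :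
  c0 + 2*cp + 2*cq = 0 ->
  flim (at_right 0) (monomial p q r s eta0 c0 cp cq cr cs) (limit_at_0 eta0 c0 cp cq cr cs).
Proof.
  intros Hc. destruct admissible_facts as (_ & _ & _ & Hr0 & Hs0 & _ & Hb).
  destruct orbit_limits_at_minfty as (F1 & F2 & _ & _ & F5 & F6).
  apply monomial_limit_at_0; auto; [lra|]. apply Rmult_lt_0_compat; auto. apply Rmult_lt_0_compat; auto.
Qed.

(* The time shift that makes [Gamma(0) = G0]. *)
Definition eta0_for :=
  ((1+al)/Dd al m n * ln kappa + n/Dd al m n * ln (r0 al m n lam)
   + al/Dd al m n * ln (s0 al m n lam) - ln G0) / a1 al m n.

Lemma GammaF_limit_at_0 : flim (at_right 0) (GammaF al m n p r s eta0_for) G0.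
Proof.
  destruct admissible_facts as (HD & Ha & _).
  eapply flim_ext; [intros x; symmetry; apply (GammaF_monomial _ _ _ _ q)| |
    apply monomial_limit_along_orbit; unfold a1; field; auto].
  unfold limit_at_0. rewrite Rmult_1_r, <- (exp_ln G0) by auto. f_equal.
  unfold eta0_for, a1. field. auto.
Qed.

Lemma UF_limit_at_0 : flim (at_right 0) (UF al m n p r s eta0_for) (aa al m n lam * G0).
Proof.
  apply (flim_ext (fun xi => GammaF al m n p r s eta0_for xi * at_log r eta0_for xi) _ (G0 * r0 al m n lam));
    [intros x; symmetry; apply (UF_eq_GammaF_r _ _ _ _ q); auto | unfold r0; ring|].
  apply flim_mult; [exact GammaF_limit_at_0|]. apply flim_at_log. apply orbit_limits_at_minfty.
Qed.

Lemma ThetaF_limit_at_0 :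
  flim (at_right 0) (ThetaF al m n p r s eta0_for)
    (Rpower (cc al m n lam) (-(1/(1+al))) * Rpower G0 (m/(1+al))
     * Rpower (aa al m n lam * G0) ((1+n)/(1+al))).
Proof.
  destruct admissible_facts as (HD & Ha & _ & Hr0 & Hs0 & Haa & _).
  eapply flim_ext; [intros x; symmetry; apply (ThetaF_monomial _ _ _ _ q)| |
    apply monomial_limit_along_orbit; unfold Defs.c1; field; auto].
  rewrite cc_eq_aa_s0 by lra. unfold limit_at_0, Rpower. rewrite Rmult_1_r, <- !exp_plus. f_equal.
  rewrite Rmult_0_l, !ln_mult by auto. unfold eta0_for, a1, Defs.c1, r0. unfold Dd in *. field. auto.
Qed.

Lemma SigmaF_limit_at_0 :
  flim (at_right 0) (SigmaF al m n p r s eta0_for)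
    (Rpower (cc al m n lam) (al/(1+al)) * Rpower G0 (m/(1+al))
     * Rpower (aa al m n lam * G0) (-((al-n)/(1+al)))).
Proof.
  destruct admissible_facts as (HD & Ha & _ & Hr0 & Hs0 & Haa & _).
  eapply flim_ext; [intros x; symmetry; apply (SigmaF_monomial _ _ _ _ q)| |
    apply monomial_limit_along_orbit; unfold Defs.d1; field; auto].
  rewrite cc_eq_aa_s0 by lra. unfold limit_at_0, Rpower. rewrite Rmult_1_r, <- !exp_plus. f_equal.
  rewrite Rmult_0_l, !ln_mult by auto. unfold eta0_for, a1, Defs.d1, r0. unfold Dd in *. field. auto.
Qed.

Lemma VF_over_xi_limit_at_0 :
  flim (at_right 0) (fun xi => VF al m n lam p q r s eta0_for xi / xi) (aa al m n lam * G0).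
Proof.
  destruct admissible_facts as (HD & Ha & _ & Hr0 & Hs0 & Haa & Hb).
  apply (flim_ext_loc (fun xi => / bb al m n lam * monomial p q r s eta0_for (- b1 al m n - 1)
           (-(al-m-n)/Dd al m n) 1 (n/Dd al m n) (al/Dd al m n) xi) _
           (/ bb al m n lam * limit_at_0 eta0_for (- b1 al m n - 1)
              (-(al-m-n)/Dd al m n) 1 (n/Dd al m n) (al/Dd al m n))).
  - apply eventually_right0. intros x Hx.
    rewrite (VF_monomial _ _ _ _ _ _ _ _ _ HP). unfold Rdiv.
    rewrite Rmult_assoc, monomial_div_xi by auto. reflexivity.
  - transitivity (exp (- ln (bb al m n lam)) * limit_at_0 eta0_for (- b1 al m n - 1)
                    (-(al-m-n)/Dd al m n) 1 (n/Dd al m n) (al/Dd al m n));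
      [f_equal; rewrite exp_Ropp, exp_ln; auto|].
    rewrite <- (exp_ln (aa al m n lam)), <- (exp_ln G0), <- exp_plus by auto.
    unfold limit_at_0. rewrite Rmult_1_r, <- exp_plus. f_equal.
    rewrite !ln_mult by (try apply Rmult_lt_0_compat; auto).
    unfold eta0_for, a1, b1, r0. unfold Dd in *. field. auto.
  - apply flim_mult; [apply flim_const|]. apply monomial_limit_along_orbit.
    unfold b1. unfold Dd in *. field. auto.
Qed.

Lemma VF_limit_at_0 : flim (at_right 0) (VF al m n lam p q r s eta0_for) 0.
Proof.
  apply (flim_ext_loc (fun xi => VF al m n lam p q r s eta0_for xi / xi * xi) _ (aa al m n lam * G0 * 0));
    [|ring|apply flim_mult; [exact VF_over_xi_limit_at_0 | apply flim_at_right0_id]].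
  apply eventually_right0. intros x Hx. field. lra.
Qed.

Definition Gamma2 := G0 * (kappa * y1 al m n lam) * exp (-2*eta0_for) * / lam.

Definition Theta2 :=
  Rpower (cc al m n lam) (-(1/(1+al))) * Rpower G0 (m/(1+al))
  * Rpower (aa al m n lam * G0) ((1+n)/(1+al))
  * (kappa * y1 al m n lam * s0 al m n lam + r0 al m n lam * (kappa * z1 al m n lam))
  * exp (-2*eta0_for) * / lam.

Definition U2 := Gamma2 * r0 al m n lam + G0 * (kappa * (2 * y1 al m n lam)) * exp (-2*eta0_for).

Lemma dGamma_over_xi_limit_at_0 :
  flim (at_right 0) (fun xi => dGamma al m n lam p r s eta0_for xi / xi) Gamma2.
Proof.
  destruct admissible_facts as (_ & _ & _ & Hr0 & _).
  destruct orbit_limits_at_minfty as (_ & _ & F3 & _).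
  pose proof (flim_at_log _ eta0_for _ F3) as C3. pose proof GammaF_limit_at_0 as LG.
  apply (flim_ext_loc (fun xi => GammaF al m n p r s eta0_for xi
     * (exp (-2*(ln xi - eta0_for)) * (r (ln xi - eta0_for) - r0 al m n lam)) * exp (-2*eta0_for) * / lam)
     _ Gamma2); [|reflexivity|unfold Gamma2; flim_auto].
  apply eventually_right0. intros x Hx. unfold dGamma, at_log. symmetry.
  transitivity (GammaF al m n p r s eta0_for x * (r (ln x - eta0_for) - r0 al m n lam) * / (x * x) * / lam);
    [unfold r0; field; split; lra|].
  rewrite (inv_square_at_log x eta0_for) by auto. ring.
Qed.

Lemma dTheta_over_xi_limit_at_0 :
  flim (at_right 0) (fun xi => dTheta al m n lam p r s eta0_for xi / xi) Theta2.
Proof.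
  destruct admissible_facts as (HD & Ha & _ & Hr0 & Hs0 & Haa & _).
  destruct orbit_limits_at_minfty as (_ & _ & F3 & F4 & _ & F6).
  pose proof (flim_at_log _ eta0_for _ F3) as C3. pose proof (flim_at_log _ eta0_for _ F4) as C4.
  pose proof (flim_at_log _ eta0_for _ F6) as C6. pose proof ThetaF_limit_at_0 as LT.
  apply (flim_ext_loc (fun xi => ThetaF al m n p r s eta0_for xi
     * (exp (-2*(ln xi - eta0_for)) * (r (ln xi - eta0_for) - r0 al m n lam) * s (ln xi - eta0_for)
        + r0 al m n lam * (exp (-2*(ln xi - eta0_for)) * (s (ln xi - eta0_for) - s0 al m n lam)))
     * exp (-2*eta0_for) * / lam) _ Theta2); [|reflexivity|unfold Theta2; flim_auto].
  apply eventually_right0. intros x Hx. unfold dTheta, at_log. rewrite cc_eq_aa_s0 by lra. symmetry.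
  transitivity (ThetaF al m n p r s eta0_for x * ((r (ln x - eta0_for) - r0 al m n lam) * s (ln x - eta0_for)
     + r0 al m n lam * (s (ln x - eta0_for) - s0 al m n lam)) * / (x * x) * / lam);
    [unfold r0; field; split; lra|].
  rewrite (inv_square_at_log x eta0_for) by auto. ring.
Qed.

Lemma dSigma_over_xi_limit_at_0 :
  flim (at_right 0) (fun xi => dSigma al m n lam p q r s eta0_for xi / xi)
    ((bb al m n lam + lam) * (aa al m n lam * G0)).
Proof.
  pose proof VF_over_xi_limit_at_0 as LV. pose proof UF_limit_at_0 as LU.
  apply (flim_ext_loc (fun xi => bb al m n lam * (VF al m n lam p q r s eta0_for xi / xi)
     + lam * UF al m n p r s eta0_for xi) _ (bb al m n lam * (aa al m n lam * G0) + lam * (aa al m n lam * G0)));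
    [|ring|flim_auto].
  apply eventually_right0. intros x Hx. unfold dSigma. field. lra.
Qed.

Lemma dU_over_xi_limit_at_0 :
  flim (at_right 0) (fun xi => dU al m n lam p q r s eta0_for xi / xi) U2.
Proof.
  destruct admissible_facts as (HD & Ha & _ & Hr0 & Hs0 & _).
  destruct Hadm as (_ & _ & _ & _ & _ & HDe & _).
  destruct orbit_limits_at_minfty as (F1 & F2 & F3 & F4 & F5 & F6).
  pose proof dGamma_over_xi_limit_at_0 as LdG. pose proof GammaF_limit_at_0 as LG.
  pose proof (flim_at_log _ eta0_for _ F5) as C5.
  set (K := (al-m-n)/(lam*(1+al))).
  set (A := fun x => r x * ((exp (-2*x) * (r x - r0 al m n lam)) * (K + al/lam*(s x - (1+m+n)/(1+al)))
    + lam * (exp (-2*x) * (p x - 0)) * r x + exp (-2*x) * (q x - 0)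
    + al/lam * r0 al m n lam * (exp (-2*x) * (s x - s0 al m n lam)))).
  set (LA := r0 al m n lam * ((kappa * y1 al m n lam) * (K + al/lam*(s0 al m n lam - (1+m+n)/(1+al)))
    + lam * (kappa * 1) * r0 al m n lam + kappa * (bb al m n lam * r0 al m n lam)
    + al/lam * r0 al m n lam * (kappa * z1 al m n lam))).
  assert (CA : flim (at_right 0) (fun xi => A (ln xi - eta0_for)) LA)
    by (apply flim_at_log; unfold A, LA; flim_auto).
  apply (flim_ext_loc (fun xi => dGamma al m n lam p r s eta0_for xi / xi * r (ln xi - eta0_for)
     + GammaF al m n p r s eta0_for xi * A (ln xi - eta0_for) * exp (-2*eta0_for) * / n) _
    (Gamma2 * r0 al m n lam + G0 * LA * exp (-2*eta0_for) * / n)).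
  - apply eventually_right0. intros x Hx. unfold dU, at_log. rewrite (Fr_rhs_centered al m n lam) by lra. symmetry.
    transitivity (dGamma al m n lam p r s eta0_for x / x * r (ln x - eta0_for) + GammaF al m n p r s eta0_for x *
      (r (ln x - eta0_for) * ((r (ln x - eta0_for) - r0 al m n lam) * (K + al / lam * (s (ln x - eta0_for) - (1 + m + n) / (1 + al))) +
        lam * p (ln x - eta0_for) * r (ln x - eta0_for) + q (ln x - eta0_for)
        + al / lam * r0 al m n lam * (s (ln x - eta0_for) - s0 al m n lam))) * / (x * x) * / n);
      [unfold K; field; repeat split; lra|].
    rewrite (inv_square_at_log x eta0_for) by auto. unfold A. ring.
  - unfold U2. rewrite <- (eigenvector_r_row al m n lam) by lra. unfold LA, K. field. lra.
  - flim_auto.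
Qed.

Lemma second_derivatives_signs_at_0 :
  Gamma2 < 0 /\ Theta2 < 0 /\ U2 < 0.
Proof.
  destruct admissible_facts as (_ & _ & _ & Hr0 & Hs0 & _).
  destruct (y1_neg_z1_neg al m lam n Hal Hm Hl Hn Hadm) as [Hy1 Hz1].
  assert (HE : 0 < exp (-2*eta0_for)) by apply exp_pos.
  assert (Hil : 0 < / lam) by (apply Rinv_0_lt_compat; lra).
  assert (Hky : 0 < kappa * (- y1 al m n lam)) by (apply Rmult_lt_0_compat; lra).
  assert (Hkz : 0 < kappa * (- z1 al m n lam)) by (apply Rmult_lt_0_compat; lra).
  assert (HG2 : 0 < - Gamma2).
  { replace (- Gamma2) with (G0 * (kappa * (- y1 al m n lam)) * exp (-2*eta0_for) * / lam)
      by (unfold Gamma2; ring).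
    repeat apply Rmult_lt_0_compat; first [assumption | apply exp_pos | lra]. }
  repeat split; [lra| |].
  - set (T0 := Rpower (cc al m n lam) (-(1/(1+al))) * Rpower G0 (m/(1+al))
               * Rpower (aa al m n lam * G0) ((1+n)/(1+al))).
    assert (HT0 : 0 < T0) by (unfold T0; repeat apply Rmult_lt_0_compat; apply exp_pos).
    assert (0 < kappa * (- y1 al m n lam) * s0 al m n lam + r0 al m n lam * (kappa * (- z1 al m n lam)))
      by (pose proof (Rmult_lt_0_compat _ _ Hky Hs0); pose proof (Rmult_lt_0_compat _ _ Hr0 Hkz); lra).
    assert (0 < T0 * (kappa * (- y1 al m n lam) * s0 al m n lam + r0 al m n lam * (kappa * (- z1 al m n lam)))
              * exp (-2*eta0_for) * / lam) by (repeat apply Rmult_lt_0_compat; first [assumption | apply exp_pos | lra]).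
    replace Theta2 with (- (T0 * (kappa * (- y1 al m n lam) * s0 al m n lam
      + r0 al m n lam * (kappa * (- z1 al m n lam))) * exp (-2*eta0_for) * / lam)) by (unfold Theta2, T0; ring).
    lra.
  - assert (0 < - Gamma2 * r0 al m n lam) by (apply Rmult_lt_0_compat; lra).
    assert (0 < G0 * (kappa * - y1 al m n lam) * exp (-2*eta0_for)) by (repeat apply Rmult_lt_0_compat; first [assumption | apply exp_pos | lra]).
    unfold U2. replace (Gamma2 * r0 al m n lam + G0 * (kappa * (2 * y1 al m n lam)) * exp (-2*eta0_for))
      with (- (- Gamma2 * r0 al m n lam + 2 * (G0 * (kappa * - y1 al m n lam) * exp (-2*eta0_for)))) by ring.
    lra.
Qed.

Hypothesis HS : solves_S al m n lam p q r s.

Lemma profiles_expansion_at_0 :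
  let b := bb al m n lam in
  let U0 := aa al m n lam * G0 in
  let T0 := Rpower (cc al m n lam) (-(1/(1+al))) * Rpower G0 (m/(1+al))
            * Rpower U0 ((1+n)/(1+al)) in
  let S0 := Rpower (cc al m n lam) (al/(1+al)) * Rpower G0 (m/(1+al))
            * Rpower U0 (-((al-n)/(1+al))) in
  let e0 := eta0_for in
  let V := VF al m n lam p q r s e0 in
  let U := UF al m n p r s e0 in
  exists G2 T2 U2 : R,
    let S2 := (b + lam) * U0 in
    expansion0 (GammaF al m n p r s e0) (dGamma al m n lam p r s e0) G0 G2 /\ G2 < 0 /\
    expansion0 (ThetaF al m n p r s e0) (dTheta al m n lam p r s e0) T0 T2 /\ T2 < 0 /\
    expansion0 (SigmaF al m n p r s e0) (dSigma al m n lam p q r s e0) S0 S2 /\ 0 < S2 /\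
    expansion0 U (dU al m n lam p q r s e0) U0 U2 /\ U2 < 0 /\
    rlim0 V 0 /\
    rlim0 (fun xi => (V xi - U0 * xi - U2 * xi^3 / 6) / xi^3) 0.
Proof.
  intros b U0 T0 S0 e0 V U.
  destruct admissible_facts as (HD & Ha & Hb & _ & _ & Haa & Hbp).
  destruct second_derivatives_signs_at_0 as (HG2 & HT2 & HU2).
  assert (HU : expansion0 U (dU al m n lam p q r s e0) U0 U2)
    by (apply expansion0_of_derivative; [intros; apply is_derive_UF | exact UF_limit_at_0
      | exact dU_over_xi_limit_at_0]; auto).
  exists Gamma2, Theta2, U2. intros S2.
  refine (conj _ (conj HG2 (conj _ (conj HT2 (conj _ (conj _ (conj HU (conj HU2 (conj _ _))))))))).
  - apply expansion0_of_derivative; [intros; apply (is_derive_GammaF _ _ _ _ _ q) | exact GammaF_limit_at_0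
      | exact dGamma_over_xi_limit_at_0]; auto.
  - apply expansion0_of_derivative; [intros; apply (is_derive_ThetaF _ _ _ _ _ q) | exact ThetaF_limit_at_0
      | exact dTheta_over_xi_limit_at_0]; auto.
  - apply expansion0_of_derivative; [intros; apply is_derive_SigmaF | exact SigmaF_limit_at_0
      | exact dSigma_over_xi_limit_at_0]; auto.
  - unfold S2, b, U0. apply Rmult_lt_0_compat; [lra | apply Rmult_lt_0_compat; auto].
  - apply flim_rlim0, VF_limit_at_0.
  - apply flim_rlim0, (cubic_expansion_of_primitive V U U0 U2);
      [intros; apply is_derive_VF; auto | exact VF_limit_at_0 | apply rlim0_flim, HU].
Qed.

End NearZero.

Lemma Rabs_ln_between x lo hi :
  0 < lo -> lo < x -> x < hi -> Rabs (ln x) <= Rabs (ln lo) + Rabs (ln hi).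
Proof.
  intros H1 H2 H3. assert (ln lo < ln x) by (apply ln_increasing; lra).
  assert (ln x < ln hi) by (apply ln_increasing; lra).
  pose proof (Rabs_pos (ln lo)). pose proof (Rabs_pos (ln hi)).
  pose proof (Rle_abs (ln hi)). pose proof (Rle_abs (- ln lo)). rewrite Rabs_Ropp in *.
  apply Rabs_le. lra.
Qed.

Lemma exp_le_compat x y : x <= y -> exp x <= exp y.
Proof. intros [H|H]; [apply Rlt_le, exp_increasing; auto | subst; lra]. Qed.

Lemma mul_le_Rabs_mul a b B : Rabs b <= B -> a * b <= Rabs a * B.
Proof.
  intros H. eapply Rle_trans; [apply Rle_abs|]. rewrite Rabs_mult.
  apply Rmult_le_compat_l; [apply Rabs_pos | auto].
Qed.

(* [ln] of [p] over its expected size [e^(-k eta) r^(n/e) s^(al/e) q^(D/e)], [e = al-m-n]. *)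
Definition log_p_defect al m n (p q r s : R -> R) (x : R) :=
  ln (p x) + (1+m+n)/(al-m-n) * x - n/(al-m-n) * ln (r x) - al/(al-m-n) * ln (s x)
  - Dd al m n/(al-m-n) * ln (q x).

Section AtInfinity.
Variables (al m n lam : R) (p q r s : R -> R).
Hypotheses (Hal : 0 < al) (Hm : -1 < m) (Hn : 0 < n) (Hl : 0 < lam)
  (Hadm : admissible al m lam n) (HS : solves_S al m n lam p q r s) (HP : positive_orbit p q r s)
  (Lq : lim_pinfty q 1) (Lr : lim_pinfty r (r1 al m n lam)) (Ls : lim_pinfty s (s1 al m n lam)).

Lemma is_derive_log_p_defect x :
  is_derive (log_p_defect al m n p q r s) x
    (- (Dd al m n * bb al m n lam / (al-m-n)) * p x * r x / q x).
Proof.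
  destruct Hadm as (HD & He & _). destruct (HS x) as (Dp & Dq & Dr & Ds).
  destruct (HP x) as (P1 & P2 & P3 & P4).
  apply is_derive_Reals in Dp, Dq, Dr, Ds. unfold log_p_defect. eapply is_derive_eq.
  - apply is_derive_Rminus; [apply is_derive_Rminus; [apply is_derive_Rminus; [apply is_derive_Rplus|]|]|].
    + apply is_derive_Rln; [exact Dp | auto].
    + apply is_derive_Rscal, is_derive_Rid.
    + apply is_derive_Rscal, is_derive_Rln; [exact Dr | auto].
    + apply is_derive_Rscal, is_derive_Rln; [exact Ds | auto].
    + apply is_derive_Rscal, is_derive_Rln; [exact Dq | auto].
  - unfold Fp, Fq, Fr_rhs, Fs, aa, bb. unfold Dd in *. field. repeat split; lra.
Qed.

Lemma qrs_eventually_bracketed : exists M, forall x, M < x ->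
  (1/2 < q x < 2) /\ (r1 al m n lam / 2 < r x < 2 * r1 al m n lam) /\
  (s1 al m n lam / 2 < s x < 2 * s1 al m n lam).
Proof.
  destruct Hadm as (_ & _ & _ & _ & _ & _ & g7 & g8 & _).
  destruct (Lq (1/2) ltac:(lra)) as [Mq HMq].
  destruct (Lr (r1 al m n lam / 2) ltac:(lra)) as [Mr HMr].
  destruct (Ls (s1 al m n lam / 2) ltac:(lra)) as [Ms HMs].
  exists (Rmax Mq (Rmax Mr Ms)). intros x Hx.
  pose proof (Rmax_l Mq (Rmax Mr Ms)). pose proof (Rmax_r Mq (Rmax Mr Ms)).
  pose proof (Rmax_l Mr Ms). pose proof (Rmax_r Mr Ms).
  specialize (HMq x ltac:(lra)). specialize (HMr x ltac:(lra)). specialize (HMs x ltac:(lra)).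
  apply Rabs_def2 in HMq, HMr, HMs. repeat split; lra.
Qed.

Lemma log_p_defect_nonincreasing a x :
  a <= x -> log_p_defect al m n p q r s x <= log_p_defect al m n p q r s a.
Proof.
  destruct Hadm as (HD & He & _ & Hb & _).
  apply (nonincreasing_from _ (fun x => - (Dd al m n * bb al m n lam / (al-m-n)) * p x * r x / q x)).
  - intros y _. apply is_derive_log_p_defect.
  - intros y _. destruct (HP y) as (P1 & P2 & P3 & P4).
    assert (0 < Dd al m n * bb al m n lam / (al-m-n))
      by (apply Rdiv_lt_0_compat; [apply Rmult_lt_0_compat|]; auto).
    assert (0 < (Dd al m n * bb al m n lam / (al-m-n)) * p y * r y / q y)
      by (apply Rdiv_lt_0_compat; [apply Rmult_lt_0_compat; [apply Rmult_lt_0_compat|]|]; auto).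
    unfold Rdiv in *. lra.
Qed.

(* [e^(-log_p_defect) p = e^(-k eta) r^(n/e) s^(al/e) q^(D/e)], and [q, r, s] are bounded. *)
Lemma log_p_defect_rate_bound : exists C M, 0 < C /\ forall x, M < x ->
  exp (- log_p_defect al m n p q r s x) * (Dd al m n * bb al m n lam / (al-m-n) * p x * r x / q x)
  <= C * exp (- ((1+m+n)/(al-m-n)) * x).
Proof.
  destruct Hadm as (HD & He & _ & Hb & _ & _ & g7 & g8 & _).
  destruct qrs_eventually_bracketed as [M0 HM0].
  set (e := al - m - n) in *. set (k := (1+m+n)/e). set (Phi := log_p_defect al m n p q r s).
  set (Lmax := n/e * ln (2 * r1 al m n lam) + al/e * ln (2 * s1 al m n lam) + Dd al m n / e * ln 2).
  set (B := Dd al m n * bb al m n lam / e).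
  assert (HB : 0 < B) by (unfold B; apply Rdiv_lt_0_compat; [apply Rmult_lt_0_compat|]; auto).
  exists (B * (4 * r1 al m n lam) * exp Lmax), M0.
  split; [apply Rmult_lt_0_compat; [apply Rmult_lt_0_compat; lra | apply exp_pos]|].
  intros x Hx. destruct (HP x) as (P1 & P2 & P3 & P4). destruct (HM0 x Hx) as (Q1 & Q2 & Q3).
  set (E := n/e * ln (r x) + al/e * ln (s x) + Dd al m n / e * ln (q x)).
  assert (HE : exp (- Phi x) * p x = exp (- k * x) * exp E).
  { rewrite <- exp_plus. rewrite <- (exp_ln (p x)) at 1 by auto. rewrite <- exp_plus.
    f_equal. unfold Phi, log_p_defect, E, k. fold e. ring. }
  assert (HEl : exp E <= exp Lmax).
  { apply exp_le_compat. unfold E, Lmax.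
    assert (ln (r x) <= ln (2 * r1 al m n lam)) by (apply Rlt_le, ln_increasing; lra).
    assert (ln (s x) <= ln (2 * s1 al m n lam)) by (apply Rlt_le, ln_increasing; lra).
    assert (ln (q x) <= ln 2) by (apply Rlt_le, ln_increasing; lra).
    assert (0 < n/e) by (apply Rdiv_lt_0_compat; lra).
    assert (0 < al/e) by (apply Rdiv_lt_0_compat; lra).
    assert (0 < Dd al m n/e) by (apply Rdiv_lt_0_compat; lra).
    apply Rplus_le_compat; [apply Rplus_le_compat|]; apply Rmult_le_compat_l; lra. }
  assert (Hrq : 0 <= r x / q x <= 4 * r1 al m n lam).
  { split; [apply Rlt_le, Rdiv_lt_0_compat; lra|].
    apply (Rmult_le_reg_r (q x)); auto. unfold Rdiv. rewrite Rmult_assoc, Rinv_l by lra. nra. }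
  replace (exp (- Phi x) * (B * p x * r x / q x)) with (B * (r x / q x) * (exp (- Phi x) * p x))
    by (field; lra).
  rewrite HE. pose proof (exp_pos (- k * x)). pose proof (exp_pos E).
  assert (B * (r x / q x) * exp E <= B * (4 * r1 al m n lam) * exp Lmax)
    by (apply Rmult_le_compat; try nra; apply Rmult_le_pos; lra).
  nra.
Qed.

(* Since [e^(-log_p_defect) + (C/k) e^(-k eta)] is nonincreasing. *)
Lemma log_p_defect_bounded_below : exists L M, forall x, M <= x -> L <= log_p_defect al m n p q r s x.
Proof.
  destruct Hadm as (HD & He & _).
  destruct log_p_defect_rate_bound as [C [M0 [HC HM0]]].
  set (e := al - m - n) in *. set (k := (1+m+n)/e) in *. set (Phi := log_p_defect al m n p q r s) in *.
  set (B := Dd al m n * bb al m n lam / e) in *.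
  assert (Hk : 0 < k) by (unfold k; apply Rdiv_lt_0_compat; lra).
  set (W := fun x => exp (- Phi x) + C / k * exp (- k * x)).
  assert (HW : forall x, M0 + 1 <= x -> W x <= W (M0 + 1)).
  { apply (nonincreasing_from _ (fun x => exp (- Phi x) * (B * p x * r x / q x) - C * exp (- k * x))).
    - intros x _. unfold W. eapply is_derive_eq.
      + apply is_derive_Rplus; [apply is_derive_Rexp, (is_derive_opp Phi), is_derive_log_p_defect|].
        apply is_derive_Rscal, is_derive_Rexp, is_derive_Rscal, is_derive_Rid.
      + simpl. unfold opp; simpl. destruct (HP x) as (P1 & P2 & P3 & P4). unfold B, k, e in *.
        field. repeat split; lra.
    - intros x Hx. specialize (HM0 x ltac:(lra)). lra. }
  assert (HCk : 0 < C / k) by (apply Rdiv_lt_0_compat; auto).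
  assert (HW1 : 0 < W (M0 + 1))
    by (unfold W; pose proof (exp_pos (- Phi (M0 + 1))); pose proof (exp_pos (- k * (M0 + 1))); nra).
  exists (- ln (W (M0 + 1))), (M0 + 1). intros x Hx.
  specialize (HW x Hx). unfold W in HW at 1. pose proof (exp_pos (- k * x)).
  assert (Hle : exp (- Phi x) <= W (M0 + 1)) by nra.
  assert (- Phi x <= ln (W (M0 + 1))); [|fold Phi; lra].
  rewrite <- (ln_exp (- Phi x)). destruct (Rle_lt_or_eq_dec _ _ Hle) as [H2|H2].
  - apply Rlt_le, ln_increasing; auto. apply exp_pos.
  - rewrite H2; lra.
Qed.

Lemma logs_bounded_at_infty : exists B M, forall x, M < x ->
  Rabs (log_p_defect al m n p q r s x) <= B /\ Rabs (ln (q x)) <= B /\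
  Rabs (ln (r x)) <= B /\ Rabs (ln (s x)) <= B.
Proof.
  destruct Hadm as (_ & _ & _ & _ & _ & _ & g7 & g8 & _).
  destruct qrs_eventually_bracketed as [M0 HM0].
  destruct log_p_defect_bounded_below as [L [M1 HL]].
  set (M := Rmax (M0 + 1) M1). set (Phi := log_p_defect al m n p q r s).
  set (Bq := Rabs (ln (1/2)) + Rabs (ln 2)).
  set (Br := Rabs (ln (r1 al m n lam / 2)) + Rabs (ln (2 * r1 al m n lam))).
  set (Bs := Rabs (ln (s1 al m n lam / 2)) + Rabs (ln (2 * s1 al m n lam))).
  set (Bp := Rabs (Phi M) + Rabs L).
  assert (0 <= Bp /\ 0 <= Bq /\ 0 <= Br /\ 0 <= Bs) by (unfold Bp, Bq, Br, Bs;
    repeat split; apply Rplus_le_le_0_compat; apply Rabs_pos).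
  exists (Bp + Bq + Br + Bs), M. intros x Hx.
  pose proof (Rmax_l (M0 + 1) M1). pose proof (Rmax_r (M0 + 1) M1).
  destruct (HM0 x ltac:(unfold M in *; lra)) as (Q1 & Q2 & Q3).
  assert (Rabs (ln (q x)) <= Bq) by (apply (Rabs_ln_between (q x) (1/2) 2); lra).
  assert (Rabs (ln (r x)) <= Br) by (apply Rabs_ln_between; lra).
  assert (Rabs (ln (s x)) <= Bs) by (apply Rabs_ln_between; lra).
  assert (Rabs (Phi x) <= Bp).
  { pose proof (log_p_defect_nonincreasing M x ltac:(unfold M in *; lra)).
    pose proof (HL x ltac:(unfold M in *; lra)).
    pose proof (Rle_abs (Phi M)). pose proof (Rle_abs (- L)). rewrite Rabs_Ropp in *.
    pose proof (Rabs_pos (Phi M)). pose proof (Rabs_pos L).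
    apply Rabs_le. unfold Bp, Phi in *. lra. }
  repeat split; lra.
Qed.

End AtInfinity.

(* Writing [ln(monomial)] through [log_p_defect] leaves [xi^gam] times a bounded factor. *)
Lemma monomial_bigO_at_infty al m n (p q r s : R -> R) eta0 K c0 cp cq cr cs gam (g : R -> R) :
  0 < al - m - n ->
  gam = c0 - (1+m+n)/(al-m-n) * cp ->
  (forall xi, 0 < xi -> g xi = Rpower xi gam) ->
  positive_orbit p q r s ->
  (exists B M, forall x, M < x -> Rabs (log_p_defect al m n p q r s x) <= B /\
     Rabs (ln (q x)) <= B /\ Rabs (ln (r x)) <= B /\ Rabs (ln (s x)) <= B) ->
  bigO_infty (fun xi => K * monomial p q r s eta0 c0 cp cq cr cs xi) g.
Proof.
  intros He Hgam Hg HP [B [M HB]].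
  set (e := al - m - n) in *. set (k := (1+m+n)/e) in *.
  set (Eb := Rabs (cp * k * eta0) + Rabs cp * B + Rabs (cq + cp * (Dd al m n / e)) * B
             + Rabs (cr + cp * (n/e)) * B + Rabs (cs + cp * (al/e)) * B).
  exists (Rabs K * exp Eb), (exp (M + eta0)). intros xi Hxi.
  assert (Hx0 : 0 < xi) by (pose proof (exp_pos (M + eta0)); lra).
  assert (Heta : M < ln xi - eta0).
  { assert (ln (exp (M + eta0)) < ln xi) by (apply ln_increasing; auto; apply exp_pos).
    rewrite ln_exp in H. lra. }
  destruct (HB _ Heta) as (B1 & B2 & B3 & B4).
  destruct (HP (ln xi - eta0)) as (P1 & P2 & P3 & P4).
  set (E := cp * k * eta0 + cp * log_p_defect al m n p q r s (ln xi - eta0)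
       + (cq + cp * (Dd al m n / e)) * ln (q (ln xi - eta0))
       + (cr + cp * (n/e)) * ln (r (ln xi - eta0)) + (cs + cp * (al/e)) * ln (s (ln xi - eta0))).
  assert (HE : monomial p q r s eta0 c0 cp cq cr cs xi = exp E * Rpower xi gam).
  { unfold monomial, Rpower, at_log. rewrite <- exp_plus. f_equal.
    unfold E, log_p_defect. fold e. rewrite Hgam. fold k. unfold k. field. lra. }
  assert (HEb : E <= Eb).
  { unfold E, Eb. pose proof (Rle_abs (cp * k * eta0)).
    pose proof (mul_le_Rabs_mul cp _ B B1).
    pose proof (mul_le_Rabs_mul (cq + cp * (Dd al m n / e)) _ B B2).
    pose proof (mul_le_Rabs_mul (cr + cp * (n/e)) _ B B3).
    pose proof (mul_le_Rabs_mul (cs + cp * (al/e)) _ B B4). lra. }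
  rewrite Hg, HE by auto. rewrite !Rabs_mult, (Rabs_right (exp E)) by (apply Rle_ge, Rlt_le, exp_pos).
  rewrite <- Rmult_assoc. apply Rmult_le_compat_r; [apply Rabs_pos|].
  apply Rmult_le_compat_l; [apply Rabs_pos | apply exp_le_compat; auto].
Qed.

Lemma profiles_bigO_at_infty al m n lam (p q r s : R -> R) eta0 :
  0 < al -> -1 < m -> 0 < n -> 0 < lam -> admissible al m lam n ->
  solves_S al m n lam p q r s -> positive_orbit p q r s ->
  lim_pinfty q 1 -> lim_pinfty r (r1 al m n lam) -> lim_pinfty s (s1 al m n lam) ->
  let D := Dd al m n in
  let b := bb al m n lam in
  let Gm := GammaF al m n p r s eta0 in
  let V := VF al m n lam p q r s eta0 in
  let Th := ThetaF al m n p r s eta0 in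
  let Sg := SigmaF al m n p r s eta0 in
  let U := UF al m n p r s eta0 in
  let e := al - m - n in
  let k := (1+m+n)/e in
  ((k <> 1 \/ (k = 1 /\ b = lam)) ->
     bigO_infty Gm (fun xi => Rpower xi (-((1+al)/e))) /\
     bigO_infty U (fun xi => Rpower xi (-((1+al)/e))) /\
     bigO_infty V (fun _ => 1) /\
     bigO_infty Th (fun xi => Rpower xi (-((1+m+n)/e))) /\
     bigO_infty Sg (fun xi => xi)) /\
  ((k = 1 /\ b <> lam) ->
     bigO_infty Gm (fun xi => Rpower xi (-((1+al)/e)) * Rpower (ln xi) ((1+al)/D)) /\
     bigO_infty U (fun xi => Rpower xi (-((1+al)/e)) * Rpower (ln xi) ((1+al)/D)) /\
     bigO_infty V (fun xi => Rpower (ln xi) (-(e/D))) /\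
     bigO_infty Th (fun xi => Rpower xi (-((1+m+n)/e)) * Rpower (ln xi) ((1+m+n)/D)) /\
     bigO_infty Sg (fun xi => xi * Rpower (ln xi) (-(e/D)))).
Proof.
  intros Hal Hm Hn Hl Hadm HS HP Lq Lr Ls D b Gm V Th Sg U e k.
  pose proof Hadm as (HD & He & _ & _ & _ & _ & _ & _ & Hk1).
  pose proof (logs_bounded_at_infty al m n lam p q r s Hal Hm Hn Hl Hadm HS HP Lq Lr Ls) as HB.
  assert (Hfit : forall f c0 cp cq cr cs K gam (g : R -> R),
    (forall xi, f xi = K * monomial p q r s eta0 c0 cp cq cr cs xi) ->
    gam = c0 - (1+m+n)/(al-m-n) * cp -> (forall xi, 0 < xi -> g xi = Rpower xi gam) ->
    bigO_infty f g).
  { intros f c0 cp cq cr cs K gam g Hf Hgam Hg.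
    destruct (monomial_bigO_at_infty al m n p q r s eta0 K c0 cp cq cr cs gam g He Hgam Hg HP HB)
      as [C [M HC]].
    exists C, M. intros x Hx. rewrite Hf. auto. }
  split.
  - intros _. repeat split.
    + apply (Hfit _ (-a1 al m n) ((1+al)/Dd al m n) 0 (n/Dd al m n) (al/Dd al m n) 1 (-((1+al)/e))).
      * intros xi. rewrite Rmult_1_l. apply GammaF_monomial.
      * unfold e, a1. unfold Dd in *. field. split; lra.
      * intros; reflexivity.
    + apply (Hfit _ (-a1 al m n) ((1+al)/Dd al m n) 0 (1 + n/Dd al m n) (al/Dd al m n) 1 (-((1+al)/e))).
      * intros xi. rewrite Rmult_1_l. apply UF_monomial.
      * unfold e, a1. unfold Dd in *. field. split; lra.
      * intros; reflexivity.
    + apply (Hfit _ (- b1 al m n) (-(al-m-n)/Dd al m n) 1 (n/Dd al m n) (al/Dd al m n) (/ b) 0).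
      * intros xi. apply VF_monomial, HP.
      * unfold b1. unfold Dd in *. field. split; lra.
      * intros xi Hxi. rewrite Rpower_O; auto.
    + apply (Hfit _ (- Defs.c1 al m n) ((1+m+n)/Dd al m n) 0 (2*n/Dd al m n) (-(1-m-n)/Dd al m n) 1
               (-((1+m+n)/e))).
      * intros xi. rewrite Rmult_1_l. apply ThetaF_monomial.
      * unfold e, Defs.c1. unfold Dd in *. field. split; lra.
      * intros; reflexivity.
    + apply (Hfit _ (- Defs.d1 al m n) (-(al-m-n)/Dd al m n) 0 (n/Dd al m n) (al/Dd al m n) 1 1).
      * intros xi. rewrite Rmult_1_l. apply SigmaF_monomial.
      * unfold Defs.d1. unfold Dd in *. field. split; lra.
      * intros xi Hxi. rewrite Rpower_1; auto.
  - intros [Hk _]. exfalso. apply Hk1.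
    assert (E1 : 1 + m + n = k * e) by (unfold k; field; unfold e; lra).
    rewrite Hk in E1. unfold e in E1. lra.
Qed.

Theorem proposition9p1 (al m lam : R)
  (Hal : 0 < al) (Hm : -1 < m) (Halm : m < al)
  (Hlam0 : 0 < lam) (Hlam1 : lam < 2*(al - m)/(1 + m)) :
  exists n1, 0 < n1 /\
  forall n, 0 < n < n1 ->
  forall (p q r s : R -> R) (kappa : R),
    heteroclinic_M0_M1 al m n lam p q r s ->
    0 < kappa ->
    leaves_M0_along_X01 al m n lam kappa p q r s ->
  forall G0 : R, 0 < G0 ->
    let D := Dd al m n in
    let a := aa al m n lam in
    let b := bb al m n lam in
    let c := cc al m n lam in
    let U0 := a * G0 in
    let T0 := Rpower c (-(1/(1+al))) * Rpower G0 (m/(1+al))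
              * Rpower U0 ((1+n)/(1+al)) in
    let S0 := Rpower c (al/(1+al)) * Rpower G0 (m/(1+al))
              * Rpower U0 (-((al-n)/(1+al))) in
    exists eta0 : R,
    let Gm := GammaF al m n p r s eta0 in
    let V := VF al m n lam p q r s eta0 in
    let Th := ThetaF al m n p r s eta0 in
    let Sg := SigmaF al m n p r s eta0 in
    let U := UF al m n p r s eta0 in
    exists dG dT dS dU : R -> R,
    (forall xi, 0 < xi ->
       derivable_pt_lim Gm xi (dG xi) /\ derivable_pt_lim Th xi (dT xi) /\
       derivable_pt_lim Sg xi (dS xi) /\ derivable_pt_lim U xi (dU xi)) /\
    (forall xi, 0 < xi ->
       derivable_pt_lim V xi (U xi) /\
       dS xi = b * V xi + lam * xi * U xi /\
       c * Th xi + lam * xi * dT xi = Sg xi * U xi /\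
       a * Gm xi + lam * xi * dG xi = U xi /\
       Sg xi = Rpower (Th xi) (-al) * Rpower (Gm xi) m * Rpower (U xi) n) /\
    (exists G2 T2 U2 : R,
       let S2 := (b + lam) * U0 in
       expansion0 Gm dG G0 G2 /\ G2 < 0 /\
       expansion0 Th dT T0 T2 /\ T2 < 0 /\
       expansion0 Sg dS S0 S2 /\ 0 < S2 /\
       expansion0 U dU U0 U2 /\ U2 < 0 /\
       rlim0 V 0 /\
       rlim0 (fun xi => (V xi - U0 * xi - U2 * xi^3 / 6) / xi^3) 0) /\
    (let e := al - m - n in
     let k := (1+m+n)/e in
     ((k <> 1 \/ (k = 1 /\ b = lam)) ->
        bigO_infty Gm (fun xi => Rpower xi (-((1+al)/e))) /\
        bigO_infty U (fun xi => Rpower xi (-((1+al)/e))) /\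
        bigO_infty V (fun _ => 1) /\
        bigO_infty Th (fun xi => Rpower xi (-((1+m+n)/e))) /\
        bigO_infty Sg (fun xi => xi)) /\
     ((k = 1 /\ b <> lam) ->
        bigO_infty Gm (fun xi => Rpower xi (-((1+al)/e)) * Rpower (ln xi) ((1+al)/D)) /\
        bigO_infty U (fun xi => Rpower xi (-((1+al)/e)) * Rpower (ln xi) ((1+al)/D)) /\
        bigO_infty V (fun xi => Rpower (ln xi) (-(e/D))) /\
        bigO_infty Th (fun xi => Rpower xi (-((1+m+n)/e)) * Rpower (ln xi) ((1+m+n)/D)) /\
        bigO_infty Sg (fun xi => xi * Rpower (ln xi) (-(e/D))))).
Proof.
  destruct (admissible_small_n al m lam Hal Hm Halm Hlam0 Hlam1) as [n1 [Hn1 Hadm_n]].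
  exists n1. split; auto.
  intros n Hn p q r s kappa Hhet Hk Hlv G0 HG0 D a b c U0 T0 S0.
  pose proof (Hadm_n n Hn) as Hadm.
  pose proof Hhet as (HS & _ & _ & _ & _ & _ & Lq & Lr & Ls).
  pose proof Hadm as (HD & He & Ha & Hb & Hs0 & _).
  assert (HP : positive_orbit p q r s)
    by (apply (heteroclinic_positive al m n lam p q r s kappa); auto; unfold r0; lra).
  assert (Hn0 : 0 < n) by lra. assert (Hal1 : 1 + al <> 0) by lra. assert (Hb0 : bb al m n lam <> 0) by lra.
  set (e0 := eta0_for al m n lam kappa G0).
  exists e0. intros Gm V Th Sg U.
  exists (dGamma al m n lam p r s e0), (dTheta al m n lam p r s e0),
    (dSigma al m n lam p q r s e0), (dU al m n lam p q r s e0).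
  split; [|split; [|split]].
  - apply (profiles_derivable al m n lam p q r s); auto; lra.
  - apply (profiles_solve_ode al m n lam p q r s); auto; lra.
  - apply (profiles_expansion_at_0 al m n lam p q r s kappa G0); auto; lra.
  - apply (profiles_bigO_at_infty al m n lam p q r s); auto; lra.
Qed.
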